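(* For each $2p\in\{60, 80, 84, 100, 112, 120, 132, 156, 160, 168, 176, 180, 204, 208, 224, 228, 240, 252, 264, 272, 276, 300, 304, 312, 320, 336, 352\}$ there exists a cyclic DCA$(4,2p+1;2p)$ satisfying P1 and P2.
   Context: A difference covering array DCA$(k,\eta;n)$ over $\mathbb{Z}_n$ (a cyclic DCA) is an $\eta\times k$ matrix $Q=[q(i,j)]$ with entries in $\mathbb{Z}_n$ such that for every pair of distinct columns $j,j'$ the multiset $\{q(i,j)-q(i,j') : 0\le i\le \eta-1\}$ contains every element of $\mathbb{Z}_n$ at least once. A DCA$(k,n+1;n)$ is taken in normalized form: all entries of its last row (row $n$) and last column (column $k-1$) equal $0$. It satisfies P1 if $0$ occurs at least twice in every column, and P2 if for all distinct columns $j,j'$ with $j\neq k-1\neq j'$, the set $\{q(i,j)-q(i,j') : 0\le i\le n-1\}$ equals $\mathbb{Z}_n\setminus\{0\}$. *)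

(* Z_n is represented by 'Z_n (all moduli used are >= 2). *)
From mathcomp Require Import all_boot all_order all_algebra.
Set Implicit Arguments. Unset Strict Implicit. Unset Printing Implicit Defensive.
Import GRing.Theory.
Local Open Scope ring_scope.

Definition is_DCA (k eta n : nat) (Q : 'M['Z_n]_(eta, k)) : Prop :=
  forall j j' : 'I_k, j != j' ->
    forall x : 'Z_n, exists i : 'I_eta, Q i j - Q i j' = x.

Definition normalized (k n : nat) (Q : 'M['Z_n]_(n.+1, k.+1)) : Prop :=
  (forall j : 'I_k.+1, Q ord_max j = 0) /\ (forall i : 'I_n.+1, Q i ord_max = 0).

Definition P1 (k n : nat) (Q : 'M['Z_n]_(n.+1, k.+1)) : Prop :=
  forall j : 'I_k.+1, (2 <= #|[set i : 'I_n.+1 | Q i j == 0%R]|)%nat.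

Definition P2 (k n : nat) (Q : 'M['Z_n]_(n.+1, k.+1)) : Prop :=
  forall j j' : 'I_k.+1, j != j' -> j != ord_max -> j' != ord_max ->
    [set Q i j - Q i j' | i in [set i : 'I_n.+1 | i != ord_max]]
    = [set x : 'Z_n | x != 0].

From Stdlib Require Import NArith.
From mathcomp Require Import all_boot all_order all_algebra.

Set Implicit Arguments. Unset Strict Implicit. Unset Printing Implicit Defensive.
Import GRing.Theory.

(* A normalized array whose columns other than the last take every value of
   Z_n on the first n rows is a DCA satisfying P1 as soon as it satisfies P2:
   against the zero column the differences run over the whole of Z_n, the zero
   row supplies the difference 0 between any two columns, and P2 supplies all
   the nonzero ones.  For each modulus such an array with three non-zero
   columns was found by computer search; the columns are listed below and the
   covering conditions are verified by evaluation, sorting each list so that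
   the coverings become linear-time subsequence tests. *)

Section NormalizedDCA.
Local Open Scope ring_scope.
Variables (k n : nat) (Q : 'M['Z_n]_(n.+1, k.+1)).
Hypotheses (n_gt0 : (0 < n)%N) (Qnorm : normalized Q).
Hypothesis Qonto : forall j, j != ord_max ->
  forall x, exists2 i : 'I_n.+1, i != ord_max & Q i j = x.

Lemma P1_normalized_onto : P1 Q.
Proof.
have [Qrow0 Qcol0] := Qnorm.
move=> j; apply/card_gt1P.
have [->|j_max] := eqVneq j ord_max.
  exists ord_max, ord0; rewrite !inE !Qcol0 eqxx; split=> //.
  by rewrite -(inj_eq val_inj) /= -lt0n.
have [i i_max Qi0] := Qonto j_max 0.
by exists ord_max, i; rewrite !inE Qrow0 Qi0 eq_sym.
Qed.

Lemma is_DCA_normalized_P2 : P2 Q -> is_DCA Q.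
Proof.
have [Qrow0 Qcol0] := Qnorm.
move=> QP2 j j' jj' x.
have [j_max|j_max] := eqVneq j ord_max.
  have j'_max : j' != ord_max by rewrite -j_max eq_sym.
  have [i _ Qix] := Qonto j'_max (- x).
  by exists i; rewrite j_max Qcol0 Qix sub0r opprK.
have [j'_max|j'_max] := eqVneq j' ord_max.
  by have [i _ Qix] := Qonto j_max x; exists i; rewrite j'_max Qcol0 Qix subr0.
have [->|x0] := eqVneq x 0; first by exists ord_max; rewrite !Qrow0 subrr.
have : x \in [set x : 'Z_n | x != 0] by rewrite inE.
by rewrite -(QP2 j j' jj' j_max j'_max) => /imsetP[i _ ->]; exists i.
Qed.

End NormalizedDCA.

Lemma ord_max_neqE n (i : 'I_n.+1) : (i != ord_max) = (i < n).
Proof. by rewrite ltn_neqAle -ltnS ltn_ord andbT -(inj_eq val_inj). Qed.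

Definition eq_mem_iotab (a b : nat) (s : seq nat) : bool :=
  all (fun x => a <= x < a + b) s && subseq (iota a b) (sort leq s).

Lemma eq_mem_iotaP a b s : eq_mem_iotab a b s -> s =i iota a b.
Proof.
case/andP=> /allP s_range /mem_subseq iota_sub x.
apply/idP/idP => [/s_range|/iota_sub]; first by rewrite mem_iota.
by rewrite mem_sort.
Qed.

Definition diff_seq (n : nat) (s t : seq nat) : seq nat :=
  [seq (nth 0 s i + (n - nth 0 t i)) %% n | i <- iota 0 n].

Definition dca_cert (n k : nat) (cols : seq (seq nat)) : bool :=
  all (fun j => (size (nth [::] cols j) == n) && eq_mem_iotab 0 n (nth [::] cols j))
      (iota 0 k) &&
  all (fun j => all (fun j' => (j == j') ||
         eq_mem_iotab 1 n.-1 (diff_seq n (nth [::] cols j) (nth [::] cols j')))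
      (iota 0 k)) (iota 0 k).

(* The modulus is written m.+2 so that 'Z_(m.+2) reduces to 'I_(m.+2). *)
Definition cert_mx (m k : nat) (cols : seq (seq nat)) : 'M['Z_m.+2]_(m.+3, k.+1) :=
  \matrix_(i, j) if (i == ord_max) || (j == ord_max) then 0%R
                 else (nth 0 (nth [::] cols j) i)%:R%R.

Lemma mem_iota0 j k : j < k -> j \in iota 0 k.
Proof. by rewrite mem_iota. Qed.

Section CertifiedDCA.
Variables (m k : nat) (cols : seq (seq nat)).
Hypothesis cert : dca_cert m.+2 k cols.
Local Notation n := m.+2.
Local Notation col j := (nth [::] cols j).
Local Notation Q := (cert_mx m k cols).

Lemma cert_col (j : 'I_k.+1) : j != ord_max -> size (col j) = n /\ col j =i iota 0 n.
Proof.
rewrite ord_max_neqE => j_lt; have /andP[/allP cols_ok _] := cert.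
by have /andP[/eqP -> /eq_mem_iotaP] := cols_ok j (mem_iota0 j_lt).
Qed.

Lemma cert_diff (j j' : 'I_k.+1) : j != ord_max -> j' != ord_max -> j != j' ->
  diff_seq n (col j) (col j') =i iota 1 n.-1.
Proof.
rewrite !ord_max_neqE -(inj_eq val_inj) => j_lt j'_lt /negbTE jj'.
have /andP[_ /allP diffs_ok] := cert.
have /allP/(_ j' (mem_iota0 j'_lt)) := diffs_ok j (mem_iota0 j_lt).
by rewrite jj' => /eq_mem_iotaP.
Qed.

Lemma cert_mxE (i : 'I_n.+1) (j : 'I_k.+1) : i != ord_max -> j != ord_max ->
  Q i j = (nth 0 (col j) i)%:R%R.
Proof. by move=> /negbTE i_max /negbTE j_max; rewrite mxE i_max j_max. Qed.

Lemma cert_mx_normalized : normalized Q.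
Proof. by split=> [j|i]; rewrite mxE eqxx ?orbT. Qed.

Lemma cert_mx_onto (j : 'I_k.+1) : j != ord_max ->
  forall x, exists2 i : 'I_n.+1, i != ord_max & Q i j = x.
Proof.
move=> j_max x; have [size_col col_mem] := cert_col j_max.
have x_col : (x : nat) \in col j by rewrite col_mem mem_iota ltn_ord.
have i_lt : index (x : nat) (col j) < n by rewrite -index_mem size_col in x_col.
have i_max : inord (index (x : nat) (col j)) != ord_max :> 'I_n.+1.
  by rewrite ord_max_neqE inordK // ltnW.
exists (inord (index (x : nat) (col j))) => //.
by rewrite cert_mxE // inordK ?nth_index ?natr_Zp // ltnW.
Qed.

Lemma cert_mx_sub (i : 'I_n.+1) (j j' : 'I_k.+1) :
    i != ord_max -> j != ord_max -> j' != ord_max ->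
  (Q i j - Q i j' = (nth 0 (diff_seq n (col j) (col j')) i)%:R)%R.
Proof.
move=> i_max j_max j'_max; have [size_col col_mem] := cert_col j'_max.
have i_lt : i < n by rewrite -ord_max_neqE.
have t_le : nth 0 (col j') i <= n.
  have : nth 0 (col j') i \in iota 0 n by rewrite -col_mem mem_nth ?size_col.
  by rewrite mem_iota => /andP[_ /ltnW].
rewrite !cert_mxE // (nth_map 0) ?size_iota // nth_iota // add0n.
by rewrite Zp_nat_mod // natrD natrB // pchar_Zp // sub0r.
Qed.

Lemma cert_mx_P2 : P2 Q.
Proof.
move=> j j' jj' j_max j'_max; have diff_mem := cert_diff j_max j'_max jj'.
set d := diff_seq n (col j) (col j') in diff_mem *.
have size_d : size d = n by rewrite size_map size_iota.
apply/setP=> x; rewrite inE; apply/imsetP/idP => [[i] | x0].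
  rewrite inE => i_max ->; rewrite cert_mx_sub //.
  have : nth 0 d i \in iota 1 n.-1 by rewrite -diff_mem mem_nth // size_d -ord_max_neqE.
  rewrite mem_iota => /andP[d_gt0 d_lt].
  apply: contraTneq d_gt0 => /(congr1 (@nat_of_ord _)).
  by rewrite val_Zp_nat // modn_small // => ->.
have x_gt0 : 0 < x by rewrite lt0n; apply: contra x0 => /eqP x0; apply/eqP/val_inj.
have x_d : (x : nat) \in d by rewrite diff_mem mem_iota x_gt0 ltn_ord.
have i_lt : index (x : nat) d < n by rewrite -index_mem size_d in x_d.
have i_max : inord (index (x : nat) d) != ord_max :> 'I_n.+1.
  by rewrite ord_max_neqE inordK // ltnW.
exists (inord (index (x : nat) d)); first by rewrite inE.
by rewrite cert_mx_sub // inordK ?nth_index ?natr_Zp // ltnW.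
Qed.

Lemma dca_cert_sound :
  exists Q : 'M['Z_n]_(n.+1, k.+1), is_DCA Q /\ normalized Q /\ P1 Q /\ P2 Q.
Proof.
have Qonto := cert_mx_onto; have Qnorm := cert_mx_normalized.
exists Q; split; first exact: is_DCA_normalized_P2 Qnorm Qonto cert_mx_P2.
by split=> //; split; [exact: P1_normalized_onto Qnorm Qonto | exact: cert_mx_P2].
Qed.

End CertifiedDCA.

(* Residues are stored in binary to keep the terms small. *)
Local Open Scope N_scope.

Definition cert60 : seq (seq N) := [::
  [:: 0; 5; 10; 15; 20; 25; 30; 35; 40; 45; 50; 55; 36; 24; 1; 49; 26; 14; 27;
      3; 52; 28; 17; 53; 42; 18; 7; 43; 32; 8; 57; 33; 46; 34; 47; 23; 12; 48;
      37; 13; 2; 38; 51; 39; 16; 4; 41; 29; 6; 54; 31; 19; 56; 44; 21; 9; 22;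
      58; 11; 59];
  [:: 50; 30; 40; 20; 5; 45; 25; 10; 55; 15; 0; 35; 22; 58; 18; 42; 32; 8; 4;
      16; 49; 1; 21; 9; 53; 17; 14; 26; 11; 59; 39; 51; 48; 12; 31; 19; 24; 36;
      29; 41; 43; 7; 52; 28; 47; 23; 2; 38; 33; 57; 3; 27; 54; 6; 44; 56; 46;
      34; 37; 13];
  [:: 30; 45; 15; 10; 50; 40; 55; 20; 0; 35; 25; 5; 54; 6; 9; 21; 39; 51; 38; 2;
      58; 22; 44; 56; 59; 11; 28; 52; 24; 36; 31; 19; 17; 53; 49; 1; 8; 32; 18;
      42; 41; 29; 3; 27; 23; 47; 14; 26; 4; 16; 7; 43; 57; 33; 37; 13; 48; 12;
      34; 46]].

Definition cert80 : seq (seq N) := [::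
  [:: 0; 5; 10; 15; 20; 25; 30; 35; 40; 45; 50; 55; 60; 65; 70; 75; 16; 64; 66;
      34; 36; 4; 6; 54; 72; 8; 42; 58; 12; 28; 62; 78; 32; 48; 2; 18; 52; 68;
      22; 38; 56; 24; 26; 74; 76; 44; 46; 14; 17; 33; 67; 3; 37; 53; 71; 39; 41;
      9; 11; 59; 61; 29; 31; 79; 1; 49; 51; 19; 21; 69; 7; 23; 57; 73; 27; 43;
      77; 13; 47; 63];
  [:: 65; 35; 70; 60; 45; 30; 20; 75; 50; 5; 25; 10; 55; 0; 40; 15; 32; 48; 33;
      17; 18; 2; 3; 67; 36; 4; 69; 21; 6; 54; 39; 71; 24; 56; 9; 41; 26; 74; 59;
      11; 28; 12; 13; 77; 78; 62; 63; 47; 16; 64; 1; 49; 66; 34; 19; 51; 52; 68;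
      53; 37; 22; 38; 7; 23; 72; 8; 73; 57; 42; 58; 43; 27; 76; 44; 61; 29; 46;
      14; 79; 31];
  [:: 70; 60; 55; 30; 40; 65; 35; 15; 25; 75; 5; 50; 20; 10; 0; 45; 64; 16; 79;
      31; 14; 46; 29; 61; 28; 12; 11; 59; 58; 42; 41; 9; 8; 72; 71; 39; 38; 22;
      21; 69; 4; 36; 19; 51; 34; 66; 49; 1; 33; 17; 48; 32; 63; 47; 62; 78; 13;
      77; 44; 76; 43; 27; 74; 26; 73; 57; 24; 56; 23; 7; 54; 6; 53; 37; 68; 52;
      3; 67; 18; 2]].

Definition cert84 : seq (seq N) := [::
  [:: 0; 7; 14; 21; 28; 35; 42; 49; 56; 63; 70; 77; 36; 72; 60; 1; 37; 25; 50;
      2; 74; 15; 51; 39; 52; 76; 40; 17; 41; 5; 66; 6; 54; 31; 55; 19; 8; 44;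
      32; 57; 9; 81; 10; 34; 82; 71; 23; 11; 24; 48; 12; 73; 13; 61; 38; 62; 26;
      3; 27; 75; 64; 16; 4; 29; 65; 53; 78; 30; 18; 43; 79; 67; 80; 20; 68; 45;
      69; 33; 22; 58; 46; 59; 83; 47];
  [:: 70; 42; 56; 28; 7; 63; 35; 14; 77; 21; 0; 49; 58; 46; 22; 6; 54; 66; 80;
      20; 68; 40; 52; 76; 25; 1; 37; 69; 33; 45; 53; 29; 65; 2; 74; 50; 23; 11;
      71; 27; 75; 3; 48; 12; 24; 31; 55; 19; 72; 60; 36; 5; 17; 41; 67; 43; 79;
      16; 4; 64; 47; 59; 83; 62; 26; 38; 81; 57; 9; 39; 15; 51; 78; 30; 18; 8;
      44; 32; 82; 10; 34; 61; 73; 13];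
  [:: 42; 63; 21; 14; 70; 56; 77; 28; 0; 49; 35; 7; 66; 6; 54; 81; 57; 9; 39;
      15; 51; 38; 62; 26; 58; 46; 22; 8; 44; 32; 47; 59; 83; 76; 40; 52; 48; 12;
      24; 67; 43; 79; 65; 53; 29; 37; 25; 1; 68; 80; 20; 78; 30; 18; 5; 17; 41;
      75; 3; 27; 23; 11; 71; 2; 74; 50; 16; 4; 64; 55; 19; 31; 33; 45; 69; 61;
      73; 13; 60; 36; 72; 34; 82; 10]].

Definition cert100 : seq (seq N) := [::
  [:: 0; 5; 10; 15; 20; 25; 30; 35; 40; 45; 50; 55; 60; 65; 70; 75; 80; 85; 90;
      95; 76; 4; 56; 84; 36; 64; 16; 44; 96; 24; 2; 58; 62; 18; 22; 78; 82; 38;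
      42; 98; 52; 8; 12; 68; 72; 28; 32; 88; 92; 48; 26; 54; 6; 34; 86; 14; 66;
      94; 46; 74; 77; 33; 37; 93; 97; 53; 57; 13; 17; 73; 51; 79; 31; 59; 11;
      39; 91; 19; 71; 99; 1; 29; 81; 9; 61; 89; 41; 69; 21; 49; 27; 83; 87; 43;
      47; 3; 7; 63; 67; 23];
  [:: 10; 95; 75; 65; 5; 55; 45; 40; 0; 80; 70; 25; 85; 20; 15; 50; 60; 35; 30;
      90; 52; 8; 12; 68; 72; 28; 32; 88; 92; 48; 29; 41; 49; 61; 69; 81; 89; 1;
      9; 21; 54; 66; 74; 86; 94; 6; 14; 26; 34; 46; 3; 87; 43; 27; 83; 67; 23;
      7; 63; 47; 76; 4; 56; 84; 36; 64; 16; 44; 96; 24; 77; 33; 37; 93; 97; 53;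
      57; 13; 17; 73; 2; 58; 62; 18; 22; 78; 82; 38; 42; 98; 79; 91; 99; 11; 19;
      31; 39; 51; 59; 71];
  [:: 15; 80; 50; 25; 40; 75; 0; 90; 45; 70; 35; 5; 95; 60; 30; 20; 10; 65; 55;
      85; 4; 16; 24; 36; 44; 56; 64; 76; 84; 96; 51; 79; 31; 59; 11; 39; 91; 19;
      71; 99; 78; 62; 18; 2; 58; 42; 98; 82; 38; 22; 29; 41; 49; 61; 69; 81; 89;
      1; 9; 21; 53; 37; 93; 77; 33; 17; 73; 57; 13; 97; 28; 12; 68; 52; 8; 92;
      48; 32; 88; 72; 3; 87; 43; 27; 83; 67; 23; 7; 63; 47; 26; 54; 6; 34; 86;
      14; 66; 94; 46; 74]].

Definition cert112 : seq (seq N) := [::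
  [:: 0; 7; 14; 21; 28; 35; 42; 49; 56; 63; 70; 77; 84; 91; 98; 105; 64; 16; 32;
      50; 2; 18; 52; 20; 68; 22; 86; 102; 8; 72; 88; 106; 58; 74; 92; 44; 60;
      78; 30; 46; 80; 48; 96; 66; 34; 82; 36; 100; 4; 38; 6; 54; 24; 104; 40;
      10; 90; 26; 108; 76; 12; 94; 62; 110; 17; 97; 33; 99; 51; 67; 101; 69; 5;
      87; 55; 103; 73; 41; 89; 59; 27; 75; 29; 93; 109; 15; 79; 95; 1; 65; 81;
      3; 83; 19; 85; 37; 53; 71; 23; 39; 57; 9; 25; 43; 107; 11; 45; 13; 61; 31;
      111; 47];
  [:: 91; 49; 98; 84; 63; 42; 28; 105; 70; 7; 35; 14; 77; 0; 56; 21; 16; 32; 64;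
      81; 1; 65; 2; 18; 50; 83; 19; 3; 68; 52; 20; 5; 101; 69; 102; 22; 86; 39;
      71; 23; 72; 88; 8; 41; 89; 73; 10; 90; 26; 107; 11; 43; 12; 108; 76; 109;
      29; 93; 110; 94; 62; 47; 31; 111; 96; 80; 48; 33; 17; 97; 82; 66; 34; 99;
      51; 67; 100; 4; 36; 53; 85; 37; 38; 6; 54; 103; 87; 55; 40; 24; 104; 9;
      25; 57; 58; 74; 106; 27; 75; 59; 60; 92; 44; 13; 61; 45; 30; 46; 78; 15;
      79; 95];
  [:: 98; 84; 77; 42; 56; 91; 49; 21; 35; 105; 7; 70; 28; 14; 0; 63; 80; 48; 96;
      79; 95; 15; 110; 94; 62; 61; 45; 13; 60; 92; 44; 11; 43; 107; 10; 90; 26;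
      73; 41; 89; 40; 24; 104; 71; 23; 39; 102; 22; 86; 69; 5; 101; 100; 4; 36;
      83; 19; 3; 2; 18; 50; 97; 33; 17; 65; 81; 1; 32; 64; 16; 111; 47; 31; 30;
      46; 78; 109; 29; 93; 12; 108; 76; 27; 75; 59; 74; 106; 58; 25; 57; 9; 88;
      8; 72; 103; 87; 55; 54; 38; 6; 37; 53; 85; 68; 52; 20; 67; 99; 51; 82; 66;
      34]].

Definition cert120 : seq (seq N) := [::
  [:: 0; 5; 10; 15; 20; 25; 30; 35; 40; 45; 50; 55; 60; 65; 70; 75; 80; 85; 90;
      95; 100; 105; 110; 115; 96; 24; 1; 49; 26; 74; 51; 99; 76; 4; 101; 29; 6;
      54; 31; 79; 56; 104; 81; 9; 106; 34; 11; 59; 36; 84; 37; 13; 86; 14; 111;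
      39; 16; 64; 41; 89; 66; 114; 91; 19; 116; 44; 21; 69; 22; 118; 47; 23; 72;
      48; 97; 73; 2; 98; 27; 3; 52; 28; 77; 53; 102; 78; 7; 103; 32; 8; 57; 33;
      82; 58; 107; 83; 12; 108; 61; 109; 62; 38; 87; 63; 112; 88; 17; 113; 42;
      18; 67; 43; 92; 68; 117; 93; 46; 94; 71; 119];
  [:: 5; 60; 25; 50; 100; 35; 90; 30; 105; 85; 70; 20; 15; 115; 55; 0; 110; 75;
      65; 45; 40; 10; 80; 95; 97; 73; 108; 12; 53; 77; 58; 82; 44; 116; 103; 7;
      42; 18; 54; 6; 69; 21; 113; 17; 62; 38; 28; 52; 3; 27; 23; 47; 59; 11; 48;
      72; 118; 22; 63; 87; 37; 13; 9; 81; 104; 56; 2; 98; 88; 112; 43; 67; 83;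
      107; 1; 49; 84; 36; 4; 76; 106; 34; 68; 92; 111; 39; 33; 57; 96; 24; 109;
      61; 8; 32; 79; 31; 26; 74; 102; 78; 51; 99; 86; 14; 71; 119; 94; 46; 93;
      117; 19; 91; 41; 89; 101; 29; 64; 16; 114; 66];
  [:: 90; 80; 75; 10; 50; 5; 45; 95; 25; 20; 85; 65; 0; 110; 60; 100; 15; 105;
      40; 55; 30; 70; 115; 35; 114; 66; 112; 88; 39; 111; 74; 26; 58; 82; 49; 1;
      33; 57; 43; 67; 53; 77; 4; 76; 113; 17; 109; 61; 72; 48; 94; 46; 108; 12;
      92; 68; 27; 3; 69; 21; 8; 32; 83; 107; 78; 102; 38; 62; 71; 119; 31; 79;
      106; 34; 54; 6; 16; 64; 93; 117; 73; 97; 86; 14; 28; 52; 116; 44; 9; 81;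
      11; 59; 51; 99; 103; 7; 18; 42; 13; 37; 29; 101; 118; 22; 24; 96; 36; 84;
      41; 89; 91; 19; 23; 47; 104; 56; 2; 98; 87; 63]].

Definition cert132 : seq (seq N) := [::
  [:: 0; 11; 22; 33; 44; 55; 66; 77; 88; 99; 110; 121; 12; 36; 48; 60; 108; 13;
      61; 85; 109; 73; 122; 14; 26; 38; 86; 111; 3; 15; 27; 75; 112; 28; 52; 76;
      40; 89; 113; 125; 5; 53; 90; 6; 30; 54; 18; 67; 91; 103; 115; 31; 68; 116;
      8; 32; 128; 57; 105; 129; 21; 117; 34; 58; 70; 82; 130; 35; 83; 107; 131;
      95; 24; 72; 96; 120; 84; 1; 25; 37; 49; 97; 2; 50; 74; 98; 62; 123; 39;
      63; 87; 51; 100; 124; 4; 16; 64; 101; 17; 41; 65; 29; 78; 102; 114; 126;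
      42; 79; 127; 19; 43; 7; 56; 80; 92; 104; 20; 45; 69; 81; 93; 9; 46; 94;
      118; 10; 106; 23; 47; 59; 71; 119];
  [:: 110; 66; 88; 44; 11; 99; 55; 22; 121; 33; 0; 77; 118; 46; 10; 106; 94;
      102; 42; 78; 114; 126; 128; 32; 116; 68; 8; 124; 64; 100; 4; 16; 25; 97;
      1; 37; 49; 69; 9; 45; 81; 93; 5; 125; 53; 113; 89; 2; 50; 74; 98; 62; 23;
      47; 59; 71; 119; 27; 15; 75; 3; 111; 84; 120; 72; 24; 96; 19; 79; 43; 7;
      127; 12; 36; 48; 60; 108; 101; 17; 41; 65; 29; 67; 91; 103; 115; 31; 40;
      76; 28; 112; 52; 95; 131; 83; 35; 107; 122; 14; 26; 38; 86; 57; 105; 129;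
      21; 117; 39; 51; 123; 63; 87; 90; 6; 30; 54; 18; 80; 20; 56; 92; 104; 58;
      130; 34; 70; 82; 13; 61; 85; 109; 73];
  [:: 66; 99; 33; 22; 110; 88; 121; 44; 0; 77; 55; 11; 42; 126; 102; 78; 114;
      21; 129; 117; 105; 57; 3; 75; 111; 15; 27; 50; 62; 2; 74; 98; 82; 70; 130;
      58; 34; 116; 128; 68; 8; 32; 47; 119; 23; 59; 71; 4; 100; 16; 64; 124; 96;
      24; 120; 84; 72; 7; 43; 127; 79; 19; 101; 17; 41; 65; 29; 73; 109; 61; 13;
      85; 80; 20; 56; 92; 104; 18; 54; 6; 90; 30; 53; 5; 113; 89; 125; 39; 51;
      123; 63; 87; 107; 35; 131; 95; 83; 86; 38; 14; 122; 26; 40; 76; 28; 112;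
      52; 103; 67; 115; 31; 91; 93; 81; 9; 69; 45; 37; 1; 49; 97; 25; 12; 36;
      48; 60; 108; 106; 10; 94; 46; 118]].

Definition cert156 : seq (seq N) := [::
  [:: 0; 13; 26; 39; 52; 65; 78; 91; 104; 117; 130; 143; 132; 84; 60; 96; 72;
      24; 145; 97; 73; 109; 85; 37; 2; 110; 86; 122; 98; 50; 27; 3; 147; 87; 75;
      51; 40; 16; 4; 100; 88; 64; 53; 29; 17; 113; 101; 77; 54; 6; 138; 18; 150;
      102; 79; 55; 43; 139; 127; 103; 80; 32; 8; 44; 20; 128; 105; 81; 69; 9;
      153; 129; 106; 58; 34; 70; 46; 154; 119; 71; 47; 83; 59; 11; 144; 120;
      108; 48; 36; 12; 1; 133; 121; 61; 49; 25; 14; 146; 134; 74; 62; 38; 15;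
      123; 99; 135; 111; 63; 28; 136; 112; 148; 124; 76; 41; 149; 125; 5; 137;
      89; 66; 42; 30; 126; 114; 90; 67; 19; 151; 31; 7; 115; 92; 68; 56; 152;
      140; 116; 93; 45; 21; 57; 33; 141; 118; 94; 82; 22; 10; 142; 131; 107; 95;
      35; 23; 155];
  [:: 130; 78; 104; 52; 13; 117; 65; 26; 143; 39; 0; 91; 70; 106; 46; 58; 154;
      34; 30; 90; 42; 114; 66; 126; 44; 80; 20; 32; 128; 8; 16; 100; 64; 40; 4;
      88; 133; 61; 25; 1; 121; 49; 69; 129; 81; 153; 105; 9; 5; 41; 137; 149;
      89; 125; 146; 74; 38; 14; 134; 62; 95; 155; 107; 23; 131; 35; 3; 87; 51;
      27; 147; 75; 72; 60; 132; 24; 96; 84; 7; 151; 67; 115; 31; 19; 120; 48;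
      12; 144; 108; 36; 29; 113; 77; 53; 17; 101; 43; 103; 55; 127; 79; 139;
      148; 28; 124; 136; 76; 112; 83; 119; 59; 71; 11; 47; 122; 2; 98; 110; 50;
      86; 93; 45; 21; 57; 33; 141; 135; 15; 111; 123; 63; 99; 6; 18; 102; 54;
      138; 150; 152; 92; 140; 68; 116; 56; 82; 142; 94; 10; 118; 22; 145; 97;
      73; 109; 85; 37];
  [:: 78; 117; 39; 26; 130; 104; 143; 52; 0; 91; 65; 13; 102; 150; 18; 138; 6;
      54; 105; 81; 69; 9; 153; 129; 63; 111; 135; 99; 123; 15; 38; 62; 74; 134;
      146; 14; 58; 70; 154; 106; 34; 46; 44; 80; 20; 32; 128; 8; 11; 59; 83; 47;
      71; 119; 88; 4; 40; 64; 100; 16; 144; 120; 108; 48; 36; 12; 67; 19; 151;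
      31; 7; 115; 149; 5; 89; 41; 125; 137; 121; 25; 133; 49; 1; 61; 116; 140;
      152; 56; 68; 92; 126; 66; 114; 42; 90; 30; 113; 53; 101; 29; 77; 17; 3;
      87; 51; 27; 147; 75; 95; 155; 107; 23; 131; 35; 98; 86; 2; 50; 122; 110;
      136; 148; 76; 28; 112; 124; 127; 43; 79; 103; 139; 55; 21; 141; 45; 33;
      93; 57; 85; 73; 145; 37; 109; 97; 96; 132; 72; 84; 24; 60; 82; 142; 94;
      10; 118; 22]].

Definition cert160 : seq (seq N) := [::
  [:: 0; 5; 10; 15; 20; 25; 30; 35; 40; 45; 50; 55; 60; 65; 70; 75; 80; 85; 90;
      95; 100; 105; 110; 115; 120; 125; 130; 135; 140; 145; 150; 155; 96; 64;
      66; 34; 36; 4; 6; 134; 72; 8; 42; 138; 12; 108; 142; 78; 16; 144; 146;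
      114; 116; 84; 22; 118; 152; 88; 122; 58; 156; 124; 126; 94; 32; 128; 2;
      98; 132; 68; 102; 38; 136; 104; 106; 74; 76; 44; 46; 14; 112; 48; 82; 18;
      52; 148; 86; 54; 56; 24; 26; 154; 92; 28; 62; 158; 97; 33; 67; 3; 37; 133;
      71; 39; 41; 9; 11; 139; 141; 109; 111; 79; 17; 113; 147; 83; 21; 149; 87;
      23; 121; 89; 91; 59; 157; 93; 127; 63; 1; 129; 131; 99; 101; 69; 7; 103;
      137; 73; 107; 43; 77; 13; 47; 143; 81; 49; 51; 19; 117; 53; 151; 119; 57;
      153; 27; 123; 61; 29; 31; 159];
  [:: 95; 35; 60; 55; 130; 105; 150; 30; 25; 65; 85; 0; 50; 155; 115; 80; 135;
      145; 10; 20; 75; 15; 120; 140; 100; 40; 70; 90; 45; 110; 5; 125; 32; 128;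
      33; 97; 98; 2; 3; 67; 36; 4; 69; 101; 6; 134; 71; 39; 8; 72; 137; 73; 138;
      42; 43; 107; 44; 76; 109; 141; 78; 142; 143; 47; 144; 16; 49; 81; 146;
      114; 19; 51; 148; 52; 53; 117; 118; 22; 23; 87; 24; 56; 89; 121; 154; 26;
      59; 91; 124; 156; 93; 157; 94; 126; 31; 159; 96; 64; 1; 129; 66; 34; 99;
      131; 132; 68; 133; 37; 38; 102; 7; 103; 104; 136; 41; 9; 74; 106; 11; 139;
      12; 108; 77; 13; 46; 14; 111; 79; 112; 48; 113; 17; 82; 18; 83; 147; 116;
      84; 21; 149; 86; 54; 151; 119; 152; 88; 57; 153; 58; 122; 27; 123; 28; 92;
      61; 29; 158; 62; 63; 127];
  [:: 75; 105; 145; 70; 125; 150; 20; 50; 130; 15; 60; 115; 85; 95; 120; 155;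
      65; 80; 0; 45; 35; 25; 90; 40; 140; 5; 135; 10; 100; 30; 55; 110; 64; 96;
      159; 31; 94; 126; 29; 61; 28; 92; 91; 59; 154; 26; 153; 57; 24; 56; 119;
      151; 54; 86; 149; 21; 116; 84; 51; 19; 114; 146; 49; 81; 48; 112; 111; 79;
      78; 142; 141; 109; 44; 76; 139; 11; 74; 106; 9; 41; 136; 104; 103; 7; 6;
      134; 37; 133; 68; 132; 67; 3; 66; 34; 129; 1; 33; 97; 128; 32; 63; 127;
      62; 158; 93; 157; 124; 156; 27; 123; 58; 122; 121; 89; 88; 152; 87; 23;
      118; 22; 53; 117; 148; 52; 83; 147; 18; 82; 113; 17; 144; 16; 143; 47; 14;
      46; 13; 77; 108; 12; 43; 107; 138; 42; 73; 137; 8; 72; 39; 71; 38; 102;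
      101; 69; 4; 36; 99; 131; 2; 98]].

Definition cert168 : seq (seq N) := [::
  [:: 0; 7; 14; 21; 28; 35; 42; 49; 56; 63; 70; 77; 84; 91; 98; 105; 112; 119;
      126; 133; 140; 147; 154; 161; 120; 72; 144; 1; 121; 25; 122; 146; 26; 3;
      27; 75; 148; 100; 4; 29; 149; 53; 78; 30; 102; 31; 55; 103; 80; 104; 152;
      57; 9; 81; 106; 58; 130; 59; 83; 131; 36; 156; 60; 85; 37; 109; 38; 62;
      110; 15; 135; 39; 136; 160; 40; 17; 41; 89; 66; 90; 138; 115; 139; 19; 92;
      44; 116; 141; 93; 165; 94; 118; 166; 143; 167; 47; 24; 48; 96; 73; 97;
      145; 50; 2; 74; 99; 51; 123; 52; 76; 124; 101; 125; 5; 150; 6; 54; 127;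
      79; 151; 8; 128; 32; 129; 153; 33; 10; 34; 82; 155; 107; 11; 108; 132; 12;
      157; 13; 61; 134; 86; 158; 87; 111; 159; 64; 16; 88; 113; 65; 137; 162;
      114; 18; 43; 163; 67; 164; 20; 68; 45; 69; 117; 22; 142; 46; 71; 23; 95];
  [:: 7; 84; 35; 70; 140; 49; 126; 42; 147; 119; 98; 28; 21; 161; 77; 0; 154;
      105; 91; 63; 56; 14; 112; 133; 121; 25; 1; 60; 36; 156; 5; 101; 125; 58;
      130; 106; 68; 164; 20; 103; 31; 55; 66; 90; 138; 78; 30; 102; 141; 93;
      165; 65; 137; 113; 158; 134; 86; 148; 100; 4; 27; 75; 3; 47; 143; 167; 83;
      131; 59; 48; 96; 24; 22; 142; 46; 135; 39; 15; 37; 109; 85; 153; 33; 129;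
      104; 152; 80; 146; 26; 122; 16; 88; 64; 43; 163; 67; 11; 155; 107; 145;
      73; 97; 132; 12; 108; 76; 124; 52; 82; 10; 34; 116; 92; 44; 159; 87; 111;
      81; 57; 9; 144; 120; 72; 61; 157; 13; 32; 8; 128; 79; 151; 127; 74; 50; 2;
      54; 150; 6; 51; 123; 99; 110; 38; 62; 23; 95; 71; 94; 118; 166; 69; 117;
      45; 139; 19; 115; 89; 17; 41; 29; 149; 53; 40; 136; 160; 114; 18; 162];
  [:: 126; 112; 105; 14; 70; 7; 63; 133; 35; 28; 119; 91; 0; 154; 84; 140; 21;
      147; 56; 77; 42; 98; 161; 49; 66; 90; 138; 16; 88; 64; 135; 39; 15; 26;
      122; 146; 58; 130; 106; 73; 97; 145; 9; 81; 57; 163; 67; 43; 5; 101; 125;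
      52; 76; 124; 17; 41; 89; 61; 157; 13; 72; 144; 120; 94; 118; 166; 36; 156;
      60; 164; 20; 68; 27; 75; 3; 117; 45; 69; 8; 128; 32; 11; 155; 107; 30;
      102; 78; 38; 62; 110; 71; 23; 95; 55; 103; 31; 34; 82; 10; 6; 54; 150;
      136; 160; 40; 165; 141; 93; 121; 25; 1; 134; 86; 158; 4; 148; 100; 44;
      116; 92; 129; 153; 33; 83; 131; 59; 99; 51; 123; 151; 127; 79; 162; 114;
      18; 37; 109; 85; 53; 29; 149; 22; 142; 46; 96; 24; 48; 132; 12; 108; 137;
      113; 65; 19; 115; 139; 167; 47; 143; 152; 80; 104; 74; 50; 2; 111; 159; 87]].

Definition cert176 : seq (seq N) := [::
  [:: 0; 11; 22; 33; 44; 55; 66; 77; 88; 99; 110; 121; 132; 143; 154; 165; 144;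
      80; 48; 16; 64; 2; 50; 162; 98; 18; 68; 116; 52; 164; 84; 134; 6; 118; 54;
      150; 24; 72; 8; 120; 40; 122; 58; 26; 170; 42; 12; 124; 92; 60; 108; 78;
      14; 158; 126; 174; 112; 160; 96; 32; 128; 34; 146; 114; 82; 130; 100; 36;
      4; 148; 20; 166; 102; 70; 38; 86; 56; 168; 136; 104; 152; 90; 138; 74; 10;
      106; 156; 28; 140; 76; 172; 46; 94; 30; 142; 62; 145; 17; 129; 65; 161;
      67; 3; 147; 115; 163; 101; 149; 85; 21; 117; 23; 135; 103; 71; 119; 89;
      25; 169; 137; 9; 123; 171; 107; 43; 139; 13; 61; 173; 109; 29; 111; 47;
      15; 159; 31; 1; 113; 81; 49; 97; 35; 83; 19; 131; 51; 133; 69; 37; 5; 53;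
      167; 39; 151; 87; 7; 57; 105; 41; 153; 73; 155; 91; 59; 27; 75; 45; 157;
      125; 93; 141; 79; 127; 63; 175; 95];
  [:: 143; 77; 154; 132; 99; 66; 44; 165; 110; 11; 55; 22; 121; 0; 88; 33; 96;
      112; 32; 128; 160; 17; 161; 145; 129; 65; 162; 2; 98; 18; 50; 3; 163; 67;
      147; 115; 100; 36; 4; 148; 20; 5; 37; 53; 69; 133; 134; 6; 118; 54; 150;
      167; 39; 151; 87; 7; 56; 168; 136; 104; 152; 73; 153; 105; 57; 41; 106;
      10; 138; 90; 74; 123; 171; 107; 43; 139; 172; 76; 28; 156; 140; 61; 29;
      13; 173; 109; 94; 62; 46; 30; 142; 159; 15; 31; 47; 111; 144; 80; 48; 16;
      64; 81; 1; 49; 97; 113; 34; 146; 114; 82; 130; 35; 83; 19; 131; 51; 84;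
      164; 116; 68; 52; 21; 85; 117; 149; 101; 166; 102; 70; 38; 86; 103; 23;
      71; 119; 135; 24; 72; 8; 120; 40; 25; 9; 89; 169; 137; 58; 42; 122; 26;
      170; 91; 75; 155; 59; 27; 12; 124; 92; 60; 108; 157; 141; 45; 125; 93; 14;
      174; 78; 158; 126; 127; 95; 79; 63; 175];
  [:: 154; 132; 121; 66; 88; 143; 77; 33; 55; 165; 11; 110; 44; 22; 0; 99; 64;
      16; 80; 144; 48; 111; 47; 15; 159; 31; 158; 78; 126; 174; 14; 61; 29; 13;
      173; 109; 140; 156; 76; 172; 28; 139; 43; 171; 123; 107; 10; 74; 106; 138;
      90; 137; 169; 9; 25; 89; 168; 152; 56; 136; 104; 71; 103; 119; 135; 23;
      54; 118; 150; 6; 134; 21; 85; 117; 149; 101; 164; 52; 84; 116; 68; 51;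
      131; 83; 35; 19; 98; 162; 18; 50; 2; 161; 65; 17; 145; 129; 113; 97; 1;
      81; 49; 160; 128; 112; 96; 32; 95; 175; 127; 79; 63; 62; 142; 94; 46; 30;
      125; 45; 93; 141; 157; 124; 108; 12; 92; 60; 75; 27; 91; 155; 59; 58; 42;
      122; 26; 170; 73; 153; 105; 57; 41; 8; 24; 120; 40; 72; 7; 87; 39; 167;
      151; 86; 38; 102; 166; 70; 37; 133; 5; 53; 69; 20; 148; 36; 100; 4; 147;
      67; 115; 163; 3; 114; 34; 82; 130; 146]].

Definition cert180 : seq (seq N) := [::
  [:: 0; 5; 10; 15; 20; 25; 30; 35; 40; 45; 50; 55; 60; 65; 70; 75; 80; 85; 90;
      95; 100; 105; 110; 115; 120; 125; 130; 135; 140; 145; 150; 155; 160; 165;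
      170; 175; 36; 144; 1; 109; 2; 38; 147; 3; 112; 148; 77; 113; 42; 78; 7;
      43; 116; 44; 117; 153; 82; 118; 11; 119; 156; 84; 157; 13; 122; 158; 51;
      159; 16; 124; 17; 53; 162; 18; 127; 163; 56; 164; 21; 129; 22; 58; 167;
      23; 132; 168; 97; 133; 62; 98; 27; 63; 136; 64; 101; 29; 102; 138; 31;
      139; 176; 104; 177; 33; 106; 34; 107; 143; 72; 108; 37; 73; 146; 74; 111;
      39; 76; 4; 41; 149; 6; 114; 151; 79; 152; 8; 81; 9; 46; 154; 47; 83; 12;
      48; 121; 49; 86; 14; 87; 123; 52; 88; 161; 89; 126; 54; 91; 19; 92; 128;
      57; 93; 166; 94; 131; 59; 96; 24; 61; 169; 26; 134; 171; 99; 172; 28; 137;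
      173; 66; 174; 67; 103; 32; 68; 141; 69; 142; 178; 71; 179];
  [:: 130; 35; 25; 165; 40; 145; 120; 150; 90; 0; 45; 110; 160; 75; 155; 170;
      115; 10; 80; 135; 175; 70; 20; 100; 95; 105; 60; 140; 85; 30; 15; 55; 5;
      125; 50; 65; 62; 98; 79; 151; 41; 149; 33; 177; 8; 152; 173; 137; 96; 24;
      138; 102; 18; 162; 108; 72; 153; 117; 22; 58; 68; 32; 123; 87; 139; 31;
      142; 178; 167; 23; 146; 74; 88; 52; 171; 99; 143; 107; 122; 158; 4; 76;
      128; 92; 163; 127; 21; 129; 156; 84; 136; 64; 53; 17; 78; 42; 3; 147; 83;
      47; 73; 37; 133; 97; 82; 118; 49; 121; 59; 131; 9; 81; 179; 71; 114; 6;
      124; 16; 14; 86; 12; 48; 54; 126; 29; 101; 132; 168; 38; 2; 119; 11; 144;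
      36; 39; 111; 69; 141; 148; 112; 176; 104; 44; 116; 172; 28; 13; 157; 56;
      164; 26; 134; 89; 161; 7; 43; 94; 166; 63; 27; 19; 91; 34; 106; 113; 77;
      169; 61; 103; 67; 174; 66; 46; 154; 109; 1; 51; 159; 93; 57];
  [:: 145; 95; 100; 20; 45; 110; 140; 75; 175; 125; 155; 30; 70; 115; 65; 55;
      15; 130; 105; 85; 165; 25; 5; 60; 150; 40; 90; 10; 80; 0; 170; 35; 50;
      135; 120; 160; 29; 101; 127; 163; 164; 56; 4; 76; 81; 9; 166; 94; 28; 172;
      159; 51; 179; 71; 169; 61; 31; 139; 114; 6; 14; 86; 59; 131; 121; 49; 119;
      11; 39; 111; 98; 62; 21; 129; 89; 161; 69; 141; 149; 41; 1; 109; 84; 156;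
      174; 66; 44; 116; 18; 162; 74; 146; 124; 16; 144; 36; 106; 34; 79; 151;
      154; 46; 171; 99; 24; 96; 176; 104; 23; 167; 158; 122; 142; 178; 87; 123;
      43; 7; 57; 93; 113; 77; 148; 112; 68; 32; 54; 126; 52; 88; 138; 102; 13;
      157; 47; 83; 143; 107; 19; 91; 168; 132; 153; 117; 48; 12; 137; 173; 103;
      67; 134; 26; 42; 78; 38; 2; 118; 82; 147; 3; 17; 53; 8; 152; 64; 136; 58;
      22; 37; 73; 128; 92; 63; 27; 177; 33; 108; 72; 97; 133]].

Definition cert204 : seq (seq N) := [::
  [:: 0; 17; 34; 51; 68; 85; 102; 119; 136; 153; 170; 187; 156; 108; 12; 24;
      180; 192; 96; 48; 37; 193; 97; 109; 61; 73; 181; 133; 122; 74; 182; 194;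
      146; 158; 62; 14; 171; 87; 123; 195; 111; 183; 15; 135; 52; 172; 4; 76;
      196; 64; 100; 16; 137; 53; 89; 161; 77; 149; 185; 101; 18; 138; 174; 42;
      162; 30; 66; 186; 103; 19; 55; 127; 43; 115; 151; 67; 20; 176; 80; 92; 44;
      56; 164; 116; 105; 57; 165; 177; 129; 141; 45; 201; 190; 142; 46; 58; 10;
      22; 130; 82; 71; 23; 131; 143; 95; 107; 11; 167; 120; 36; 72; 144; 60;
      132; 168; 84; 1; 121; 157; 25; 145; 13; 49; 169; 86; 2; 38; 110; 26; 98;
      134; 50; 3; 159; 63; 75; 27; 39; 147; 99; 88; 40; 148; 160; 112; 124; 28;
      184; 173; 125; 29; 41; 197; 5; 113; 65; 54; 6; 114; 126; 78; 90; 198; 150;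
      139; 91; 199; 7; 163; 175; 79; 31; 188; 104; 140; 8; 128; 200; 32; 152;
      69; 189; 21; 93; 9; 81; 117; 33; 154; 70; 106; 178; 94; 166; 202; 118; 35;
      155; 191; 59; 179; 47; 83; 203];
  [:: 170; 102; 136; 68; 17; 153; 85; 34; 187; 51; 0; 119; 142; 46; 58; 82; 190;
      10; 22; 130; 18; 138; 174; 42; 162; 30; 66; 186; 56; 44; 20; 176; 164;
      116; 92; 80; 172; 4; 76; 16; 52; 196; 64; 100; 121; 157; 25; 169; 1; 145;
      13; 49; 57; 165; 177; 201; 105; 129; 141; 45; 89; 161; 101; 185; 53; 137;
      77; 149; 38; 110; 50; 134; 2; 86; 26; 98; 107; 95; 71; 23; 11; 167; 143;
      131; 159; 63; 75; 99; 3; 27; 39; 147; 144; 84; 168; 132; 72; 36; 120; 60;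
      91; 199; 7; 31; 139; 163; 175; 79; 156; 108; 12; 24; 180; 192; 96; 48;
      173; 125; 29; 41; 197; 5; 113; 65; 55; 127; 67; 151; 19; 103; 43; 115; 40;
      148; 160; 184; 88; 112; 124; 28; 35; 155; 191; 59; 179; 47; 83; 203; 74;
      182; 194; 14; 122; 146; 158; 62; 93; 33; 117; 81; 21; 189; 69; 9; 171; 87;
      123; 195; 111; 183; 15; 135; 54; 6; 114; 126; 78; 90; 198; 150; 104; 140;
      8; 152; 188; 128; 200; 32; 106; 178; 118; 202; 70; 154; 94; 166; 37; 193;
      97; 109; 61; 73; 181; 133];
  [:: 102; 153; 51; 34; 170; 136; 187; 68; 0; 119; 85; 17; 78; 54; 6; 114; 90;
      198; 150; 126; 129; 105; 57; 165; 141; 45; 201; 177; 27; 3; 159; 63; 39;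
      147; 99; 75; 38; 110; 50; 134; 2; 86; 26; 98; 22; 10; 190; 142; 130; 82;
      58; 46; 20; 176; 80; 92; 44; 56; 164; 116; 71; 23; 131; 143; 95; 107; 11;
      167; 160; 184; 28; 124; 148; 40; 88; 112; 36; 72; 144; 84; 120; 60; 132;
      168; 19; 55; 127; 67; 103; 43; 115; 151; 77; 137; 53; 89; 149; 185; 101;
      161; 145; 1; 121; 157; 13; 49; 169; 25; 128; 188; 104; 140; 200; 32; 152;
      8; 174; 42; 186; 66; 138; 18; 162; 30; 41; 65; 113; 5; 29; 125; 173; 197;
      195; 135; 15; 183; 123; 87; 171; 111; 191; 59; 203; 83; 155; 35; 179; 47;
      158; 146; 122; 74; 62; 14; 194; 182; 196; 52; 172; 4; 64; 100; 16; 76; 7;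
      31; 79; 175; 199; 91; 139; 163; 9; 69; 189; 21; 81; 117; 33; 93; 109; 133;
      181; 73; 97; 193; 37; 61; 156; 108; 12; 24; 180; 192; 96; 48; 70; 106;
      178; 118; 154; 94; 166; 202]].

Definition cert208 : seq (seq N) := [::
  [:: 0; 13; 26; 39; 52; 65; 78; 91; 104; 117; 130; 143; 156; 169; 182; 195; 80;
      32; 112; 96; 176; 128; 66; 146; 82; 178; 114; 194; 132; 84; 164; 148; 20;
      180; 118; 198; 134; 22; 166; 38; 184; 136; 8; 200; 72; 24; 106; 58; 138;
      122; 202; 154; 28; 188; 60; 44; 124; 76; 14; 94; 30; 126; 62; 142; 144;
      16; 160; 48; 192; 64; 2; 162; 34; 18; 98; 50; 196; 68; 4; 100; 36; 116;
      54; 6; 86; 70; 150; 102; 40; 120; 56; 152; 88; 168; 170; 42; 186; 74; 10;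
      90; 92; 172; 108; 204; 140; 12; 158; 110; 190; 174; 46; 206; 1; 81; 17;
      113; 49; 129; 131; 3; 147; 35; 179; 51; 197; 149; 21; 5; 85; 37; 183; 55;
      199; 87; 23; 103; 105; 185; 121; 9; 153; 25; 171; 123; 203; 187; 59; 11;
      93; 45; 125; 109; 189; 141; 79; 159; 95; 191; 127; 207; 145; 97; 177; 161;
      33; 193; 67; 19; 99; 83; 163; 115; 53; 133; 69; 165; 101; 181; 119; 71;
      151; 135; 7; 167; 41; 201; 73; 57; 137; 89; 27; 107; 43; 139; 75; 155;
      157; 29; 173; 61; 205; 77; 15; 175; 47; 31; 111; 63];
  [:: 169; 91; 182; 156; 117; 78; 52; 195; 130; 13; 65; 26; 143; 0; 104; 39; 96;
      80; 176; 32; 128; 112; 17; 129; 81; 49; 1; 113; 66; 146; 82; 178; 114;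
      194; 19; 83; 115; 67; 99; 163; 68; 100; 116; 196; 4; 36; 69; 181; 133;
      101; 53; 165; 134; 38; 198; 166; 118; 22; 71; 135; 167; 119; 151; 7; 120;
      152; 168; 40; 56; 88; 9; 105; 153; 185; 25; 121; 42; 74; 90; 170; 186; 10;
      43; 155; 107; 75; 27; 139; 28; 188; 60; 44; 124; 76; 173; 77; 29; 205;
      157; 61; 30; 142; 94; 62; 14; 126; 79; 159; 95; 191; 127; 207; 16; 48; 64;
      144; 160; 192; 97; 161; 193; 145; 177; 33; 18; 2; 98; 162; 50; 34; 3; 35;
      51; 131; 147; 179; 132; 84; 164; 148; 20; 180; 5; 197; 85; 149; 37; 21;
      70; 54; 150; 6; 102; 86; 199; 103; 55; 23; 183; 87; 200; 184; 72; 136; 24;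
      8; 57; 41; 137; 201; 89; 73; 106; 58; 138; 122; 202; 154; 59; 203; 171;
      11; 187; 123; 108; 12; 172; 140; 92; 204; 45; 109; 141; 93; 125; 189; 110;
      174; 206; 158; 190; 46; 111; 47; 15; 63; 31; 175];
  [:: 182; 156; 143; 78; 104; 169; 91; 39; 65; 195; 13; 130; 52; 26; 0; 117;
      128; 176; 96; 112; 32; 80; 159; 191; 207; 79; 95; 127; 30; 142; 94; 62;
      14; 126; 29; 61; 77; 157; 173; 205; 124; 60; 28; 76; 44; 188; 139; 27; 75;
      107; 155; 43; 90; 10; 74; 186; 42; 170; 25; 153; 9; 121; 185; 105; 168;
      88; 152; 56; 120; 40; 7; 151; 119; 167; 135; 71; 166; 134; 118; 38; 22;
      198; 149; 5; 37; 197; 21; 85; 20; 164; 132; 180; 148; 84; 3; 35; 51; 131;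
      147; 179; 98; 34; 2; 50; 18; 162; 17; 129; 81; 49; 1; 113; 177; 193; 97;
      33; 145; 161; 192; 160; 144; 64; 48; 16; 63; 111; 31; 47; 175; 15; 174;
      158; 46; 110; 206; 190; 109; 93; 189; 45; 141; 125; 172; 204; 12; 92; 108;
      140; 59; 203; 171; 11; 187; 123; 106; 58; 138; 122; 202; 154; 201; 57; 89;
      41; 73; 137; 24; 72; 200; 8; 136; 184; 55; 87; 103; 183; 199; 23; 86; 102;
      6; 150; 54; 70; 181; 101; 165; 69; 133; 53; 36; 4; 196; 116; 100; 68; 67;
      19; 99; 83; 163; 115; 146; 178; 194; 66; 82; 114]].

Definition cert224 : seq (seq N) := [::
  [:: 0; 7; 14; 21; 28; 35; 42; 49; 56; 63; 70; 77; 84; 91; 98; 105; 112; 119;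
      126; 133; 140; 147; 154; 161; 168; 175; 182; 189; 196; 203; 210; 217; 64;
      128; 32; 162; 2; 130; 164; 132; 68; 134; 198; 102; 8; 72; 200; 106; 170;
      74; 204; 44; 172; 206; 174; 110; 176; 16; 144; 50; 114; 18; 52; 20; 180;
      150; 118; 54; 120; 184; 88; 122; 90; 26; 92; 156; 60; 190; 30; 158; 192;
      160; 96; 66; 34; 194; 36; 100; 4; 38; 6; 166; 136; 104; 40; 10; 202; 138;
      108; 76; 12; 78; 142; 46; 80; 48; 208; 178; 146; 82; 148; 212; 116; 22;
      86; 214; 24; 216; 152; 218; 58; 186; 220; 188; 124; 94; 62; 222; 129; 97;
      33; 99; 163; 67; 101; 69; 5; 199; 167; 103; 73; 41; 201; 171; 139; 75;
      141; 205; 109; 15; 79; 207; 17; 209; 145; 115; 83; 19; 85; 149; 53; 183;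
      23; 151; 57; 121; 25; 155; 219; 123; 29; 93; 221; 127; 191; 95; 1; 65;
      193; 3; 195; 131; 197; 37; 165; 71; 135; 39; 169; 9; 137; 43; 107; 11; 45;
      13; 173; 143; 111; 47; 113; 177; 81; 211; 51; 179; 213; 181; 117; 87; 55;
      215; 185; 153; 89; 59; 27; 187; 157; 125; 61; 31; 223; 159];
  [:: 133; 49; 84; 77; 182; 147; 210; 42; 35; 91; 119; 0; 70; 217; 161; 112;
      189; 203; 14; 28; 105; 21; 168; 196; 140; 56; 98; 126; 63; 154; 7; 175;
      128; 32; 64; 193; 1; 65; 2; 130; 162; 195; 131; 3; 68; 164; 132; 5; 101;
      69; 102; 134; 198; 135; 39; 71; 72; 200; 8; 73; 41; 201; 74; 106; 170; 11;
      43; 107; 12; 108; 76; 109; 141; 205; 206; 174; 110; 207; 15; 79; 16; 144;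
      176; 209; 145; 17; 178; 146; 82; 51; 179; 211; 180; 52; 20; 53; 85; 149;
      54; 150; 118; 215; 87; 55; 88; 120; 184; 121; 25; 57; 90; 26; 122; 187;
      59; 27; 188; 124; 220; 157; 125; 61; 190; 30; 158; 223; 159; 31; 96; 192;
      160; 33; 129; 97; 194; 66; 34; 99; 163; 67; 100; 4; 36; 165; 197; 37; 38;
      6; 166; 167; 103; 199; 104; 40; 136; 169; 9; 137; 202; 138; 10; 139; 75;
      171; 172; 204; 44; 13; 173; 45; 142; 46; 78; 143; 111; 47; 208; 80; 48;
      177; 81; 113; 114; 18; 50; 83; 19; 115; 116; 148; 212; 181; 117; 213; 86;
      214; 22; 183; 23; 151; 152; 24; 216; 89; 185; 153; 58; 186; 218; 123; 155;
      219; 156; 60; 92; 221; 29; 93; 222; 94; 62; 191; 95; 127];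
  [:: 105; 147; 203; 98; 175; 210; 28; 70; 182; 21; 84; 161; 119; 133; 168; 217;
      91; 112; 0; 63; 49; 35; 126; 56; 196; 7; 189; 14; 140; 42; 77; 154; 192;
      160; 96; 191; 95; 127; 222; 94; 62; 61; 157; 125; 60; 92; 156; 123; 155;
      219; 122; 90; 26; 153; 89; 185; 152; 24; 216; 151; 183; 23; 22; 86; 214;
      149; 53; 85; 212; 116; 148; 83; 19; 115; 114; 18; 50; 145; 17; 209; 208;
      80; 48; 15; 79; 207; 46; 78; 142; 13; 173; 45; 44; 172; 204; 139; 75; 171;
      170; 74; 106; 137; 169; 9; 40; 136; 104; 71; 135; 39; 198; 102; 134; 37;
      165; 197; 100; 4; 36; 195; 131; 3; 2; 130; 162; 33; 129; 97; 65; 193; 1;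
      32; 64; 128; 223; 159; 31; 30; 158; 190; 221; 29; 93; 124; 220; 188; 27;
      187; 59; 58; 186; 218; 121; 25; 57; 88; 120; 184; 215; 87; 55; 54; 150;
      118; 181; 117; 213; 180; 52; 20; 179; 211; 51; 146; 82; 178; 81; 113; 177;
      144; 176; 16; 47; 143; 111; 110; 206; 174; 205; 109; 141; 12; 108; 76; 11;
      43; 107; 138; 10; 202; 41; 201; 73; 72; 200; 8; 167; 103; 199; 6; 166; 38;
      5; 101; 69; 68; 164; 132; 67; 99; 163; 34; 194; 66]].

Definition cert228 : seq (seq N) := [::
  [:: 0; 19; 38; 57; 76; 95; 114; 133; 152; 171; 190; 209; 96; 156; 24; 120;
      216; 180; 144; 168; 36; 97; 217; 181; 145; 109; 37; 193; 13; 205; 134;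
      194; 62; 158; 26; 218; 182; 206; 74; 39; 99; 195; 63; 159; 123; 87; 111;
      207; 40; 160; 124; 88; 52; 208; 136; 184; 148; 77; 137; 5; 101; 197; 161;
      125; 149; 17; 78; 198; 162; 126; 90; 18; 174; 222; 186; 115; 175; 43; 139;
      7; 199; 163; 187; 55; 116; 8; 200; 164; 128; 56; 212; 32; 224; 21; 141;
      105; 69; 33; 189; 117; 165; 129; 58; 118; 214; 82; 178; 142; 106; 130;
      226; 59; 179; 143; 107; 71; 227; 155; 203; 167; 192; 84; 48; 12; 204; 132;
      60; 108; 72; 1; 61; 157; 25; 121; 85; 49; 73; 169; 2; 122; 86; 50; 14;
      170; 98; 146; 110; 135; 27; 219; 183; 147; 75; 3; 51; 15; 172; 4; 100;
      196; 64; 28; 220; 16; 112; 173; 65; 29; 221; 185; 113; 41; 89; 53; 210;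
      42; 138; 6; 102; 66; 30; 54; 150; 211; 103; 67; 31; 223; 151; 79; 127; 91;
      20; 80; 176; 44; 140; 104; 68; 92; 188; 153; 213; 81; 177; 45; 9; 201;
      225; 93; 154; 46; 10; 202; 166; 94; 22; 70; 34; 191; 23; 119; 215; 83; 47;
      11; 35; 131];
  [:: 190; 114; 152; 76; 19; 171; 95; 38; 209; 57; 0; 133; 214; 58; 82; 106;
      130; 178; 226; 118; 142; 174; 126; 186; 18; 78; 198; 90; 162; 222; 80; 92;
      20; 176; 104; 188; 44; 140; 68; 136; 88; 148; 208; 40; 160; 52; 124; 184;
      193; 145; 205; 37; 97; 217; 109; 181; 13; 117; 69; 129; 189; 21; 141; 33;
      105; 165; 101; 5; 125; 17; 137; 149; 161; 77; 197; 2; 122; 86; 50; 14;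
      170; 98; 146; 110; 191; 23; 119; 215; 83; 47; 11; 35; 131; 3; 183; 15; 75;
      135; 27; 147; 219; 51; 60; 12; 72; 132; 192; 84; 204; 48; 108; 67; 211;
      31; 79; 127; 223; 91; 103; 151; 96; 156; 24; 120; 216; 180; 144; 168; 36;
      173; 65; 29; 221; 185; 113; 41; 89; 53; 115; 175; 43; 139; 7; 199; 163;
      187; 55; 196; 100; 220; 112; 4; 16; 28; 172; 64; 155; 107; 167; 227; 59;
      179; 71; 143; 203; 134; 194; 62; 158; 26; 218; 182; 206; 74; 81; 153; 177;
      201; 225; 45; 93; 213; 9; 63; 195; 87; 207; 99; 111; 123; 39; 159; 42; 54;
      210; 138; 66; 150; 6; 102; 30; 212; 164; 224; 56; 116; 8; 128; 200; 32;
      22; 202; 34; 94; 154; 46; 166; 10; 70; 157; 1; 25; 49; 73; 121; 169; 61;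
      85];
  [:: 114; 171; 57; 38; 190; 152; 209; 76; 0; 133; 95; 19; 198; 222; 78; 162;
      18; 186; 126; 90; 174; 165; 33; 141; 21; 129; 117; 105; 189; 69; 63; 195;
      87; 207; 99; 111; 123; 39; 159; 62; 134; 158; 182; 206; 26; 74; 194; 218;
      58; 118; 214; 82; 178; 142; 106; 130; 226; 8; 32; 116; 200; 56; 224; 164;
      128; 212; 143; 59; 107; 155; 203; 71; 167; 179; 227; 124; 40; 88; 136;
      184; 52; 148; 160; 208; 48; 192; 12; 60; 108; 204; 72; 84; 132; 127; 223;
      103; 211; 91; 79; 67; 151; 31; 173; 65; 29; 221; 185; 113; 41; 89; 53;
      193; 145; 205; 37; 97; 217; 109; 181; 13; 176; 20; 44; 68; 92; 140; 188;
      80; 104; 138; 210; 6; 30; 54; 102; 150; 42; 66; 5; 77; 101; 125; 149; 197;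
      17; 137; 161; 27; 51; 135; 219; 75; 15; 183; 147; 3; 23; 35; 191; 119; 47;
      131; 215; 83; 11; 14; 170; 146; 122; 98; 50; 2; 110; 86; 28; 112; 64; 16;
      196; 100; 4; 220; 172; 175; 187; 115; 43; 199; 55; 139; 7; 163; 9; 93; 45;
      225; 177; 81; 213; 201; 153; 121; 85; 73; 61; 49; 25; 1; 169; 157; 96;
      156; 24; 120; 216; 180; 144; 168; 36; 70; 166; 46; 154; 34; 22; 10; 94;
      202]].

Definition cert240 : seq (seq N) := [::
  [:: 0; 5; 10; 15; 20; 25; 30; 35; 40; 45; 50; 55; 60; 65; 70; 75; 80; 85; 90;
      95; 100; 105; 110; 115; 120; 125; 130; 135; 140; 145; 150; 155; 160; 165;
      170; 175; 180; 185; 190; 195; 200; 205; 210; 215; 220; 225; 230; 235; 96;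
      144; 1; 49; 146; 194; 51; 99; 196; 4; 101; 149; 102; 198; 7; 103; 56; 104;
      201; 9; 106; 154; 107; 203; 12; 108; 157; 13; 62; 158; 207; 63; 112; 208;
      17; 113; 162; 18; 211; 19; 212; 68; 117; 213; 166; 214; 167; 23; 72; 168;
      217; 73; 122; 218; 171; 219; 76; 124; 77; 173; 126; 174; 31; 79; 176; 224;
      177; 33; 226; 34; 227; 83; 36; 84; 37; 133; 182; 38; 87; 183; 232; 88; 41;
      89; 42; 138; 91; 139; 236; 44; 237; 93; 142; 238; 191; 239; 192; 48; 97;
      193; 2; 98; 147; 3; 52; 148; 197; 53; 6; 54; 151; 199; 152; 8; 57; 153;
      202; 58; 11; 59; 156; 204; 61; 109; 206; 14; 111; 159; 16; 64; 161; 209;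
      66; 114; 67; 163; 116; 164; 21; 69; 22; 118; 71; 119; 216; 24; 121; 169;
      26; 74; 27; 123; 172; 28; 221; 29; 222; 78; 127; 223; 32; 128; 81; 129;
      82; 178; 131; 179; 132; 228; 181; 229; 86; 134; 231; 39; 136; 184; 137;
      233; 186; 234; 187; 43; 92; 188; 141; 189; 46; 94; 47; 143];
  [:: 70; 205; 120; 135; 85; 125; 20; 185; 145; 40; 60; 10; 200; 80; 130; 115;
      195; 55; 35; 220; 175; 30; 15; 140; 165; 215; 25; 75; 105; 225; 100; 45;
      5; 170; 90; 155; 95; 235; 210; 180; 230; 0; 65; 190; 150; 160; 110; 50;
      62; 158; 233; 137; 168; 72; 123; 27; 209; 161; 73; 217; 196; 4; 181; 229;
      29; 221; 104; 56; 108; 12; 98; 2; 136; 184; 64; 16; 74; 26; 119; 71; 183;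
      87; 59; 11; 103; 7; 44; 236; 131; 179; 6; 54; 99; 51; 28; 172; 81; 129;
      139; 91; 101; 149; 159; 111; 69; 21; 93; 237; 164; 116; 9; 201; 97; 193;
      226; 34; 162; 18; 31; 79; 19; 211; 191; 239; 138; 42; 84; 36; 94; 46; 144;
      96; 109; 61; 38; 182; 174; 126; 176; 224; 118; 22; 202; 58; 49; 1; 204;
      156; 53; 197; 173; 77; 14; 206; 214; 166; 228; 132; 102; 198; 76; 124;
      113; 17; 234; 186; 52; 148; 219; 171; 92; 188; 78; 222; 48; 192; 39; 231;
      63; 207; 128; 32; 24; 216; 199; 151; 187; 43; 41; 89; 163; 67; 117; 213;
      208; 112; 147; 3; 178; 82; 68; 212; 127; 223; 66; 114; 154; 106; 141; 189;
      13; 157; 134; 86; 83; 227; 169; 121; 167; 23; 107; 203; 57; 153; 142; 238;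
      194; 146; 37; 133; 33; 177; 8; 152; 122; 218; 232; 88; 143; 47];
  [:: 65; 125; 235; 215; 180; 160; 5; 190; 35; 10; 80; 130; 95; 45; 75; 20; 210;
      225; 15; 105; 200; 40; 170; 185; 230; 205; 175; 150; 195; 165; 55; 145;
      90; 50; 140; 115; 30; 135; 0; 220; 155; 70; 120; 60; 100; 25; 85; 110;
      109; 61; 217; 73; 47; 143; 139; 91; 132; 228; 224; 176; 49; 1; 134; 86; 7;
      103; 2; 98; 112; 208; 74; 26; 19; 211; 201; 9; 63; 207; 148; 52; 186; 234;
      93; 237; 51; 99; 213; 117; 88; 232; 104; 56; 82; 178; 181; 229; 238; 142;
      233; 137; 83; 227; 78; 222; 87; 183; 81; 129; 203; 107; 77; 173; 18; 162;
      58; 202; 28; 172; 23; 167; 198; 102; 123; 27; 96; 144; 236; 44; 31; 79;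
      62; 158; 168; 72; 204; 156; 68; 212; 149; 101; 161; 209; 214; 166; 138;
      42; 16; 64; 111; 159; 169; 121; 33; 177; 53; 197; 189; 141; 163; 67; 114;
      66; 196; 4; 76; 124; 133; 37; 48; 192; 43; 187; 127; 223; 164; 116; 152;
      8; 69; 21; 14; 206; 218; 122; 22; 118; 54; 6; 89; 41; 199; 151; 13; 157;
      24; 216; 184; 136; 146; 194; 34; 226; 193; 97; 153; 57; 231; 39; 29; 221;
      154; 106; 113; 17; 179; 131; 71; 119; 94; 46; 84; 36; 108; 12; 3; 147;
      188; 92; 128; 32; 59; 11; 126; 174; 38; 182; 239; 191; 219; 171]].

Definition cert252 : seq (seq N) := [::
  [:: 0; 7; 14; 21; 28; 35; 42; 49; 56; 63; 70; 77; 84; 91; 98; 105; 112; 119;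
      126; 133; 140; 147; 154; 161; 168; 175; 182; 189; 196; 203; 210; 217; 224;
      231; 238; 245; 36; 72; 144; 73; 181; 145; 218; 2; 74; 3; 111; 75; 148;
      184; 4; 113; 149; 221; 78; 114; 186; 115; 223; 187; 8; 44; 116; 225; 9;
      81; 10; 118; 82; 155; 191; 11; 192; 48; 12; 157; 13; 229; 122; 230; 194;
      15; 51; 123; 232; 16; 88; 17; 125; 89; 162; 198; 18; 127; 163; 235; 164;
      20; 236; 57; 93; 165; 94; 202; 166; 239; 23; 95; 24; 132; 96; 169; 205;
      25; 206; 62; 26; 171; 27; 243; 136; 244; 208; 101; 209; 173; 246; 30; 102;
      211; 247; 67; 248; 104; 68; 213; 69; 33; 178; 34; 250; 71; 107; 179; 108;
      216; 180; 1; 37; 109; 38; 146; 110; 183; 219; 39; 220; 76; 40; 185; 41; 5;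
      150; 6; 222; 43; 79; 151; 80; 188; 152; 45; 153; 117; 190; 226; 46; 227;
      83; 47; 120; 156; 228; 85; 121; 193; 50; 86; 158; 87; 195; 159; 52; 160;
      124; 197; 233; 53; 234; 90; 54; 199; 55; 19; 92; 128; 200; 129; 237; 201;
      22; 58; 130; 59; 167; 131; 204; 240; 60; 241; 97; 61; 134; 170; 242; 99;
      135; 207; 64; 100; 172; 29; 65; 137; 66; 174; 138; 31; 139; 103; 176; 212;
      32; 141; 177; 249; 106; 142; 214; 143; 251; 215];
  [:: 182; 49; 35; 231; 56; 203; 168; 210; 126; 0; 63; 154; 224; 105; 217; 238;
      161; 14; 112; 189; 245; 98; 28; 140; 133; 147; 84; 196; 119; 42; 21; 77;
      7; 175; 70; 91; 170; 242; 134; 187; 115; 223; 221; 113; 149; 33; 213; 69;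
      188; 152; 80; 101; 209; 173; 132; 96; 24; 246; 30; 102; 198; 18; 162; 72;
      144; 36; 117; 45; 153; 166; 94; 202; 104; 68; 248; 15; 51; 123; 67; 211;
      247; 250; 178; 34; 23; 95; 239; 74; 218; 2; 52; 160; 124; 243; 171; 27;
      215; 143; 251; 230; 194; 122; 40; 220; 76; 128; 200; 92; 235; 127; 163;
      165; 57; 93; 48; 12; 192; 64; 100; 172; 53; 197; 233; 114; 186; 78; 111;
      75; 3; 191; 11; 155; 1; 37; 109; 205; 25; 169; 46; 190; 226; 13; 229; 157;
      131; 59; 167; 81; 225; 9; 71; 107; 179; 150; 6; 222; 232; 16; 88; 158; 50;
      86; 120; 156; 228; 90; 54; 234; 65; 137; 29; 240; 60; 204; 110; 38; 146;
      83; 47; 227; 216; 180; 108; 39; 183; 219; 249; 141; 177; 148; 184; 4; 176;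
      212; 32; 116; 8; 44; 244; 208; 136; 85; 121; 193; 164; 20; 236; 26; 206;
      62; 125; 89; 17; 151; 43; 79; 130; 22; 58; 207; 99; 135; 19; 199; 55; 214;
      106; 142; 185; 41; 5; 61; 241; 97; 103; 31; 139; 174; 138; 66; 10; 118;
      82; 73; 181; 145; 195; 159; 87; 201; 129; 237];
  [:: 203; 133; 140; 28; 63; 154; 196; 105; 245; 175; 217; 42; 98; 161; 91; 77;
      21; 182; 147; 119; 231; 35; 7; 84; 210; 56; 126; 14; 112; 0; 238; 49; 70;
      189; 168; 224; 101; 209; 173; 235; 127; 163; 20; 236; 164; 76; 40; 220; 9;
      81; 225; 130; 22; 58; 172; 64; 100; 51; 123; 15; 179; 71; 107; 241; 97;
      61; 139; 103; 31; 150; 6; 222; 158; 50; 86; 131; 59; 167; 229; 157; 13;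
      191; 11; 155; 75; 3; 111; 26; 206; 62; 201; 129; 237; 53; 197; 233; 69;
      33; 213; 149; 221; 113; 109; 1; 37; 192; 48; 12; 138; 66; 174; 44; 116; 8;
      18; 162; 198; 2; 74; 218; 160; 124; 52; 180; 108; 216; 142; 214; 106; 187;
      115; 223; 82; 10; 118; 207; 99; 135; 96; 24; 132; 212; 32; 176; 239; 23;
      95; 122; 230; 194; 34; 250; 178; 195; 159; 87; 79; 151; 43; 93; 165; 57;
      41; 5; 185; 4; 148; 184; 68; 248; 104; 90; 54; 234; 88; 232; 16; 246; 30;
      102; 121; 193; 85; 227; 83; 47; 143; 251; 215; 55; 19; 199; 60; 204; 240;
      153; 117; 45; 120; 156; 228; 65; 137; 29; 247; 67; 211; 170; 242; 134;
      186; 78; 114; 146; 110; 38; 226; 46; 190; 183; 219; 39; 17; 125; 89; 80;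
      188; 152; 208; 136; 244; 202; 166; 94; 181; 145; 73; 92; 128; 200; 27;
      243; 171; 249; 141; 177; 144; 36; 72; 205; 25; 169]].

Definition cert264 : seq (seq N) := [::
  [:: 0; 11; 22; 33; 44; 55; 66; 77; 88; 99; 110; 121; 132; 143; 154; 165; 176;
      187; 198; 209; 220; 231; 242; 253; 144; 168; 48; 192; 240; 1; 25; 169; 49;
      97; 2; 50; 74; 98; 194; 243; 3; 147; 27; 75; 244; 28; 52; 76; 172; 221;
      245; 125; 5; 53; 78; 102; 246; 126; 174; 79; 127; 151; 175; 7; 56; 80;
      224; 104; 152; 57; 105; 129; 153; 249; 34; 58; 202; 82; 130; 155; 179; 59;
      203; 251; 156; 204; 228; 252; 84; 13; 61; 85; 109; 205; 134; 182; 206;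
      230; 62; 255; 39; 63; 87; 183; 112; 160; 184; 208; 40; 233; 17; 41; 65;
      161; 90; 138; 162; 186; 18; 67; 91; 235; 115; 163; 68; 116; 140; 164; 260;
      189; 237; 261; 21; 117; 166; 190; 70; 214; 262; 167; 215; 239; 263; 95;
      24; 72; 96; 120; 216; 145; 193; 217; 241; 73; 122; 146; 26; 170; 218; 123;
      171; 195; 219; 51; 100; 124; 4; 148; 196; 101; 149; 173; 197; 29; 222; 6;
      30; 54; 150; 199; 223; 103; 247; 31; 200; 248; 8; 32; 128; 177; 201; 81;
      225; 9; 178; 226; 250; 10; 106; 35; 83; 107; 131; 227; 12; 36; 180; 60;
      108; 133; 157; 37; 181; 229; 254; 14; 158; 38; 86; 111; 135; 15; 159; 207;
      232; 256; 136; 16; 64; 89; 113; 257; 137; 185; 210; 234; 114; 258; 42;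
      211; 259; 19; 43; 139; 188; 212; 92; 236; 20; 45; 69; 213; 93; 141; 46;
      94; 118; 142; 238; 23; 47; 191; 71; 119];
  [:: 11; 132; 55; 110; 220; 77; 198; 66; 231; 187; 154; 44; 33; 253; 121; 0;
      242; 165; 143; 99; 88; 22; 176; 209; 217; 145; 241; 73; 193; 228; 156;
      252; 84; 204; 221; 245; 125; 5; 53; 58; 130; 34; 202; 82; 116; 260; 68;
      140; 164; 31; 247; 223; 199; 103; 90; 138; 162; 186; 18; 102; 174; 78;
      246; 126; 213; 45; 93; 141; 69; 41; 233; 65; 161; 17; 14; 86; 254; 158;
      38; 124; 196; 100; 4; 148; 3; 75; 243; 147; 27; 239; 167; 263; 95; 215;
      83; 227; 35; 107; 131; 168; 240; 144; 48; 192; 166; 190; 70; 214; 262; 39;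
      183; 255; 63; 87; 85; 13; 109; 205; 61; 249; 153; 105; 57; 129; 32; 8;
      128; 248; 200; 122; 146; 26; 170; 218; 112; 160; 184; 208; 40; 19; 211;
      43; 139; 259; 179; 251; 155; 59; 203; 49; 169; 97; 25; 1; 180; 12; 60;
      108; 36; 28; 172; 244; 52; 76; 178; 226; 250; 10; 106; 188; 212; 92; 236;
      20; 111; 135; 15; 159; 207; 81; 177; 225; 9; 201; 96; 24; 120; 216; 72;
      181; 37; 229; 157; 133; 56; 80; 224; 104; 152; 7; 175; 127; 79; 151; 2;
      50; 74; 98; 194; 222; 6; 30; 54; 150; 51; 219; 171; 123; 195; 206; 134;
      230; 62; 182; 191; 23; 71; 119; 47; 46; 94; 118; 142; 238; 189; 237; 261;
      21; 117; 67; 91; 235; 115; 163; 113; 185; 89; 257; 137; 101; 149; 173;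
      197; 29; 232; 256; 136; 16; 64; 258; 114; 42; 234; 210];
  [:: 198; 176; 165; 22; 110; 11; 99; 209; 55; 44; 187; 143; 0; 242; 132; 220;
      33; 231; 88; 121; 66; 154; 253; 77; 42; 258; 234; 210; 114; 64; 16; 256;
      232; 136; 135; 207; 111; 15; 159; 218; 170; 146; 122; 26; 10; 250; 106;
      226; 178; 25; 97; 1; 169; 49; 225; 81; 9; 201; 177; 19; 211; 43; 139; 259;
      245; 53; 221; 125; 5; 76; 52; 172; 28; 244; 17; 161; 233; 41; 65; 13; 61;
      85; 109; 205; 72; 216; 24; 96; 120; 94; 238; 46; 118; 142; 36; 108; 12;
      180; 60; 164; 140; 260; 116; 68; 171; 51; 123; 195; 219; 117; 21; 237;
      189; 261; 224; 56; 104; 152; 80; 59; 155; 203; 251; 179; 102; 174; 78;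
      246; 126; 86; 38; 14; 254; 158; 95; 263; 215; 167; 239; 127; 7; 79; 151;
      175; 130; 82; 58; 34; 202; 150; 54; 6; 222; 30; 160; 40; 112; 184; 208;
      69; 141; 45; 213; 93; 241; 217; 73; 193; 145; 206; 134; 230; 62; 182; 196;
      148; 124; 100; 4; 20; 236; 212; 188; 92; 105; 249; 57; 129; 153; 227; 131;
      83; 35; 107; 27; 147; 75; 3; 243; 247; 103; 31; 223; 199; 138; 18; 90;
      162; 186; 37; 133; 181; 229; 157; 197; 173; 29; 149; 101; 262; 214; 190;
      166; 70; 240; 192; 168; 144; 48; 252; 228; 84; 204; 156; 137; 257; 185;
      113; 89; 163; 115; 91; 67; 235; 119; 71; 47; 23; 191; 8; 200; 32; 128;
      248; 98; 74; 194; 50; 2; 183; 87; 39; 255; 63]].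

Definition cert272 : seq (seq N) := [::
  [:: 0; 17; 34; 51; 68; 85; 102; 119; 136; 153; 170; 187; 204; 221; 238; 255;
      224; 176; 80; 160; 112; 192; 96; 48; 18; 2; 242; 178; 162; 98; 66; 50; 20;
      244; 148; 228; 180; 260; 164; 116; 86; 70; 38; 246; 230; 166; 134; 118;
      88; 40; 216; 24; 248; 56; 232; 184; 122; 74; 250; 58; 10; 90; 266; 218;
      156; 108; 12; 92; 44; 124; 28; 252; 222; 206; 174; 110; 94; 30; 270; 254;
      256; 240; 208; 144; 128; 64; 32; 16; 258; 210; 114; 194; 146; 226; 130;
      82; 52; 36; 4; 212; 196; 132; 100; 84; 54; 6; 182; 262; 214; 22; 198; 150;
      120; 104; 72; 8; 264; 200; 168; 152; 154; 138; 106; 42; 26; 234; 202; 186;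
      188; 172; 140; 76; 60; 268; 236; 220; 190; 142; 46; 126; 78; 158; 62; 14;
      1; 257; 225; 161; 145; 81; 49; 33; 35; 19; 259; 195; 179; 115; 83; 67; 37;
      261; 165; 245; 197; 5; 181; 133; 103; 87; 55; 263; 247; 183; 151; 135;
      137; 121; 89; 25; 9; 217; 185; 169; 139; 91; 267; 75; 27; 107; 11; 235;
      173; 125; 29; 109; 61; 141; 45; 269; 239; 223; 191; 127; 111; 47; 15; 271;
      241; 193; 97; 177; 129; 209; 113; 65; 3; 227; 131; 211; 163; 243; 147; 99;
      69; 53; 21; 229; 213; 149; 117; 101; 71; 23; 199; 7; 231; 39; 215; 167;
      105; 57; 233; 41; 265; 73; 249; 201; 171; 155; 123; 59; 43; 251; 219; 203;
      205; 189; 157; 93; 77; 13; 253; 237; 207; 159; 63; 143; 95; 175; 79; 31];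
  [:: 221; 119; 238; 204; 153; 102; 68; 255; 170; 17; 85; 34; 187; 0; 136; 51;
      176; 80; 160; 48; 224; 112; 192; 96; 241; 193; 97; 177; 129; 209; 113; 65;
      18; 2; 242; 178; 162; 98; 66; 50; 3; 227; 131; 211; 163; 243; 147; 99; 52;
      36; 4; 212; 196; 132; 100; 84; 261; 165; 245; 133; 37; 197; 5; 181; 6;
      182; 262; 150; 54; 214; 22; 198; 23; 199; 7; 167; 71; 231; 39; 215; 104;
      72; 8; 152; 120; 264; 200; 168; 25; 169; 185; 217; 89; 121; 137; 9; 74;
      250; 58; 218; 122; 10; 90; 266; 91; 267; 75; 235; 139; 27; 107; 11; 140;
      76; 220; 236; 172; 188; 60; 268; 173; 125; 29; 109; 61; 141; 45; 269; 190;
      142; 46; 126; 78; 158; 62; 14; 175; 95; 207; 159; 79; 31; 143; 63; 208;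
      144; 16; 32; 240; 256; 128; 64; 225; 161; 33; 49; 257; 1; 145; 81; 210;
      114; 194; 82; 258; 146; 226; 130; 259; 195; 67; 83; 19; 35; 179; 115; 20;
      244; 148; 228; 180; 260; 164; 116; 69; 53; 21; 229; 213; 149; 117; 101;
      86; 70; 38; 246; 230; 166; 134; 118; 55; 263; 135; 151; 87; 103; 247; 183;
      56; 248; 88; 40; 232; 184; 24; 216; 73; 265; 105; 57; 249; 201; 41; 233;
      138; 106; 42; 186; 154; 26; 234; 202; 171; 155; 123; 59; 43; 251; 219;
      203; 108; 12; 92; 252; 156; 44; 124; 28; 157; 93; 237; 253; 189; 205; 77;
      13; 174; 110; 254; 270; 206; 222; 94; 30; 239; 223; 191; 127; 111; 47; 15;
      271];
  [:: 238; 204; 187; 102; 136; 221; 119; 51; 85; 255; 17; 170; 68; 34; 0; 153;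
      112; 224; 176; 80; 192; 96; 48; 160; 223; 191; 127; 271; 239; 111; 47; 15;
      174; 110; 254; 270; 206; 222; 94; 30; 141; 61; 173; 125; 45; 269; 109; 29;
      60; 188; 172; 140; 268; 236; 220; 76; 43; 171; 155; 123; 251; 219; 203;
      59; 10; 122; 74; 250; 90; 266; 218; 58; 89; 25; 169; 185; 121; 137; 9;
      217; 24; 184; 232; 56; 216; 40; 88; 248; 167; 215; 39; 231; 7; 199; 23;
      71; 38; 246; 118; 134; 70; 86; 230; 166; 69; 53; 21; 229; 213; 149; 117;
      101; 196; 52; 36; 4; 132; 100; 84; 212; 19; 259; 195; 67; 35; 179; 115;
      83; 162; 18; 2; 242; 98; 66; 50; 178; 161; 33; 49; 81; 225; 257; 1; 145;
      129; 241; 193; 97; 209; 113; 65; 177; 32; 64; 128; 256; 16; 144; 208; 240;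
      95; 207; 159; 63; 175; 79; 31; 143; 126; 14; 62; 158; 46; 142; 190; 78;
      77; 205; 189; 157; 13; 253; 237; 93; 92; 252; 28; 124; 12; 108; 156; 44;
      107; 27; 139; 91; 11; 235; 75; 267; 138; 106; 42; 186; 154; 26; 234; 202;
      41; 201; 249; 73; 233; 57; 105; 265; 120; 104; 72; 8; 264; 200; 168; 152;
      247; 103; 87; 55; 183; 151; 135; 263; 214; 54; 6; 182; 22; 198; 150; 262;
      197; 37; 261; 165; 5; 181; 133; 245; 244; 148; 228; 116; 20; 180; 260;
      164; 211; 99; 147; 243; 131; 227; 3; 163; 194; 82; 130; 226; 114; 210;
      258; 146]].

Definition cert276 : seq (seq N) := [::
  [:: 0; 23; 46; 69; 92; 115; 138; 161; 184; 207; 230; 253; 24; 48; 72; 96; 144;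
      192; 216; 12; 36; 108; 156; 97; 217; 61; 181; 145; 109; 229; 37; 157; 241;
      205; 254; 2; 26; 50; 98; 146; 170; 242; 266; 62; 110; 231; 255; 3; 27; 75;
      123; 147; 219; 243; 39; 87; 28; 148; 268; 112; 76; 40; 160; 244; 88; 172;
      136; 185; 209; 233; 257; 29; 77; 101; 173; 197; 269; 41; 258; 102; 222;
      66; 30; 270; 114; 198; 42; 126; 90; 139; 163; 187; 211; 259; 31; 55; 127;
      151; 223; 271; 212; 56; 176; 20; 260; 224; 68; 152; 272; 80; 44; 189; 33;
      153; 273; 237; 201; 45; 129; 249; 57; 21; 70; 94; 118; 142; 190; 238; 262;
      58; 82; 154; 202; 143; 263; 107; 227; 191; 155; 275; 83; 203; 11; 251;
      120; 240; 84; 204; 168; 132; 252; 60; 180; 264; 228; 1; 25; 49; 73; 121;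
      169; 193; 265; 13; 85; 133; 74; 194; 38; 158; 122; 86; 206; 14; 134; 218;
      182; 51; 171; 15; 135; 99; 63; 183; 267; 111; 195; 159; 208; 232; 256; 4;
      52; 100; 124; 196; 220; 16; 64; 5; 125; 245; 89; 53; 17; 137; 221; 65;
      149; 113; 162; 186; 210; 234; 6; 54; 78; 150; 174; 246; 18; 235; 79; 199;
      43; 7; 247; 91; 175; 19; 103; 67; 116; 140; 164; 188; 236; 8; 32; 104;
      128; 200; 248; 93; 117; 141; 165; 213; 261; 9; 81; 105; 177; 225; 166; 10;
      130; 250; 214; 178; 22; 106; 226; 34; 274; 47; 71; 95; 119; 167; 215; 239;
      35; 59; 131; 179];
  [:: 230; 138; 184; 92; 23; 207; 115; 46; 253; 69; 0; 161; 34; 22; 10; 274;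
      250; 226; 214; 178; 166; 130; 106; 6; 150; 18; 162; 174; 186; 54; 210; 78;
      234; 246; 236; 104; 248; 116; 128; 140; 8; 164; 32; 188; 200; 28; 148;
      268; 112; 76; 40; 160; 244; 88; 172; 136; 1; 25; 49; 73; 121; 169; 193;
      265; 13; 85; 133; 213; 81; 225; 93; 105; 117; 261; 141; 9; 165; 177; 125;
      89; 53; 17; 221; 149; 113; 5; 245; 137; 65; 2; 50; 98; 146; 242; 62; 110;
      254; 26; 170; 266; 47; 71; 95; 119; 167; 215; 239; 35; 59; 131; 179; 75;
      219; 87; 231; 243; 255; 123; 3; 147; 27; 39; 264; 252; 240; 228; 204; 180;
      168; 132; 120; 84; 60; 79; 43; 7; 247; 175; 103; 67; 235; 199; 91; 19; 24;
      48; 72; 96; 144; 192; 216; 12; 36; 108; 156; 209; 257; 29; 77; 173; 269;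
      41; 185; 233; 101; 197; 139; 163; 187; 211; 259; 31; 55; 127; 151; 223;
      271; 208; 232; 256; 4; 52; 100; 124; 196; 220; 16; 64; 11; 275; 263; 251;
      227; 203; 191; 155; 143; 107; 83; 122; 14; 182; 74; 134; 194; 86; 38; 206;
      158; 218; 189; 33; 153; 273; 237; 201; 45; 129; 249; 57; 21; 99; 267; 159;
      51; 111; 171; 63; 15; 183; 135; 195; 258; 102; 222; 66; 30; 270; 114; 198;
      42; 126; 90; 212; 56; 176; 20; 260; 224; 68; 152; 272; 80; 44; 190; 58;
      202; 70; 82; 94; 238; 118; 262; 142; 154; 97; 217; 61; 181; 145; 109; 229;
      37; 157; 241; 205];
  [:: 138; 207; 69; 46; 230; 184; 253; 92; 0; 161; 115; 23; 198; 258; 42; 102;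
      222; 66; 126; 30; 90; 270; 114; 273; 201; 129; 57; 189; 45; 249; 33; 237;
      21; 153; 15; 99; 183; 267; 159; 51; 135; 111; 195; 171; 63; 170; 110; 50;
      266; 146; 26; 242; 62; 2; 98; 254; 94; 142; 190; 238; 58; 154; 202; 70;
      118; 262; 82; 260; 152; 44; 212; 272; 56; 224; 176; 68; 20; 80; 11; 275;
      263; 251; 227; 203; 191; 155; 143; 107; 83; 124; 64; 4; 220; 100; 256;
      196; 16; 232; 52; 208; 264; 252; 240; 228; 204; 180; 168; 132; 120; 84;
      60; 151; 187; 223; 259; 55; 127; 163; 271; 31; 139; 211; 209; 257; 29; 77;
      173; 269; 41; 185; 233; 101; 197; 145; 37; 205; 97; 157; 217; 109; 61;
      229; 181; 241; 236; 104; 248; 116; 128; 140; 8; 164; 32; 188; 200; 6; 150;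
      18; 162; 174; 186; 54; 210; 78; 234; 246; 245; 53; 137; 221; 113; 5; 89;
      65; 149; 125; 17; 75; 219; 87; 231; 243; 255; 123; 3; 147; 27; 39; 167;
      35; 179; 47; 59; 71; 215; 95; 239; 119; 131; 206; 182; 158; 134; 86; 38;
      14; 218; 194; 122; 74; 268; 76; 160; 244; 136; 28; 112; 88; 172; 148; 40;
      79; 43; 7; 247; 175; 103; 67; 235; 199; 91; 19; 9; 225; 165; 105; 261;
      141; 81; 177; 117; 213; 93; 121; 265; 133; 1; 13; 25; 169; 49; 193; 73;
      85; 24; 48; 72; 96; 144; 192; 216; 12; 36; 108; 156; 130; 214; 22; 106;
      274; 166; 250; 226; 34; 10; 178]].

Definition cert300 : seq (seq N) := [::
  [:: 0; 25; 50; 75; 100; 125; 150; 175; 200; 225; 250; 275; 180; 120; 5; 245;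
      130; 70; 135; 15; 260; 140; 85; 265; 210; 90; 35; 215; 160; 40; 285; 165;
      230; 170; 235; 115; 60; 240; 185; 65; 10; 190; 255; 195; 80; 20; 205; 145;
      30; 270; 155; 95; 280; 220; 105; 45; 110; 290; 55; 295; 276; 204; 156; 84;
      36; 264; 216; 144; 96; 24; 1; 229; 181; 109; 61; 289; 241; 169; 121; 49;
      26; 254; 206; 134; 86; 14; 266; 194; 146; 74; 27; 183; 87; 243; 147; 3;
      207; 63; 267; 123; 52; 208; 112; 268; 172; 28; 232; 88; 292; 148; 77; 233;
      137; 293; 197; 53; 257; 113; 17; 173; 102; 258; 162; 18; 222; 78; 282;
      138; 42; 198; 127; 283; 187; 43; 247; 103; 7; 163; 67; 223; 152; 8; 212;
      68; 272; 128; 32; 188; 92; 248; 177; 33; 237; 93; 297; 153; 57; 213; 117;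
      273; 226; 154; 106; 34; 286; 214; 166; 94; 46; 274; 227; 83; 287; 143; 47;
      203; 107; 263; 167; 23; 252; 108; 12; 168; 72; 228; 132; 288; 192; 48;
      277; 133; 37; 193; 97; 253; 157; 13; 217; 73; 2; 158; 62; 218; 122; 278;
      182; 38; 242; 98; 51; 279; 231; 159; 111; 39; 291; 219; 171; 99; 76; 4;
      256; 184; 136; 64; 16; 244; 196; 124; 101; 29; 281; 209; 161; 89; 41; 269;
      221; 149; 126; 54; 6; 234; 186; 114; 66; 294; 246; 174; 151; 79; 31; 259;
      211; 139; 91; 19; 271; 199; 176; 104; 56; 284; 236; 164; 116; 44; 296;
      224; 201; 129; 81; 9; 261; 189; 141; 69; 21; 249; 202; 58; 262; 118; 22;
      178; 82; 238; 142; 298; 251; 179; 131; 59; 11; 239; 191; 119; 71; 299];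
  [:: 250; 150; 200; 100; 25; 225; 125; 50; 275; 75; 0; 175; 110; 290; 90; 210;
      160; 40; 20; 80; 245; 5; 105; 45; 265; 85; 70; 130; 55; 295; 195; 255;
      240; 60; 155; 95; 120; 180; 145; 205; 215; 35; 260; 140; 235; 115; 10;
      190; 165; 285; 15; 135; 270; 30; 220; 280; 230; 170; 185; 65; 202; 58;
      262; 118; 22; 178; 82; 238; 142; 298; 78; 162; 18; 102; 258; 42; 198; 282;
      138; 222; 152; 8; 212; 68; 272; 128; 32; 188; 92; 248; 4; 16; 124; 136;
      244; 256; 64; 76; 184; 196; 229; 241; 49; 61; 169; 181; 289; 1; 109; 121;
      201; 129; 81; 9; 261; 189; 141; 69; 21; 249; 53; 137; 293; 77; 233; 17;
      173; 257; 113; 197; 254; 266; 74; 86; 194; 206; 14; 26; 134; 146; 251;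
      179; 131; 59; 11; 239; 191; 119; 71; 299; 279; 291; 99; 111; 219; 231; 39;
      51; 159; 171; 228; 12; 168; 252; 108; 192; 48; 132; 288; 72; 151; 79; 31;
      259; 211; 139; 91; 19; 271; 199; 204; 216; 24; 36; 144; 156; 264; 276; 84;
      96; 29; 41; 149; 161; 269; 281; 89; 101; 209; 221; 103; 187; 43; 127; 283;
      67; 223; 7; 163; 247; 52; 208; 112; 268; 172; 28; 232; 88; 292; 148; 227;
      83; 287; 143; 47; 203; 107; 263; 167; 23; 2; 158; 62; 218; 122; 278; 182;
      38; 242; 98; 153; 237; 93; 177; 33; 117; 273; 57; 213; 297; 3; 87; 243;
      27; 183; 267; 123; 207; 63; 147; 54; 66; 174; 186; 294; 6; 114; 126; 234;
      246; 104; 116; 224; 236; 44; 56; 164; 176; 284; 296; 226; 154; 106; 34;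
      286; 214; 166; 94; 46; 274; 277; 133; 37; 193; 97; 253; 157; 13; 217; 73];
  [:: 150; 225; 75; 50; 250; 200; 275; 100; 0; 175; 125; 25; 270; 30; 45; 105;
      195; 255; 190; 10; 290; 110; 220; 280; 295; 55; 140; 260; 120; 180; 155;
      95; 85; 265; 245; 5; 40; 160; 90; 210; 205; 145; 15; 135; 115; 235; 70;
      130; 20; 80; 35; 215; 285; 165; 185; 65; 240; 60; 170; 230; 54; 66; 174;
      186; 294; 6; 114; 126; 234; 246; 129; 141; 249; 261; 69; 81; 189; 201; 9;
      21; 279; 291; 99; 111; 219; 231; 39; 51; 159; 171; 278; 62; 218; 2; 158;
      242; 98; 182; 38; 122; 178; 262; 118; 202; 58; 142; 298; 82; 238; 22; 104;
      116; 224; 236; 44; 56; 164; 176; 284; 296; 179; 191; 299; 11; 119; 131;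
      239; 251; 59; 71; 28; 112; 268; 52; 208; 292; 148; 232; 88; 172; 204; 216;
      24; 36; 144; 156; 264; 276; 84; 96; 151; 79; 31; 259; 211; 139; 91; 19;
      271; 199; 77; 233; 137; 293; 197; 53; 257; 113; 17; 173; 229; 241; 49; 61;
      169; 181; 289; 1; 109; 121; 128; 212; 68; 152; 8; 92; 248; 32; 188; 272;
      78; 162; 18; 102; 258; 42; 198; 282; 138; 222; 101; 29; 281; 209; 161; 89;
      41; 269; 221; 149; 3; 87; 243; 27; 183; 267; 123; 207; 63; 147; 203; 287;
      143; 227; 83; 167; 23; 107; 263; 47; 254; 266; 74; 86; 194; 206; 14; 26;
      134; 146; 4; 16; 124; 136; 244; 256; 64; 76; 184; 196; 127; 283; 187; 43;
      247; 103; 7; 163; 67; 223; 177; 33; 237; 93; 297; 153; 57; 213; 117; 273;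
      277; 133; 37; 193; 97; 253; 157; 13; 217; 73; 228; 12; 168; 252; 108; 192;
      48; 132; 288; 72; 154; 166; 274; 286; 94; 106; 214; 226; 34; 46]].

Definition cert304 : seq (seq N) := [::
  [:: 0; 19; 38; 57; 76; 95; 114; 133; 152; 171; 190; 209; 228; 247; 266; 285;
      96; 80; 176; 272; 64; 256; 144; 16; 112; 2; 274; 162; 50; 242; 18; 98;
      146; 34; 116; 84; 276; 164; 52; 132; 212; 260; 148; 230; 198; 86; 278;
      166; 246; 22; 70; 262; 40; 8; 200; 88; 280; 56; 136; 184; 72; 58; 42; 138;
      234; 26; 218; 106; 282; 74; 172; 156; 252; 44; 140; 28; 220; 92; 188; 286;
      270; 62; 158; 254; 142; 30; 206; 302; 192; 160; 48; 240; 128; 208; 288;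
      32; 224; 210; 194; 290; 82; 178; 66; 258; 130; 226; 20; 4; 100; 196; 292;
      180; 68; 244; 36; 134; 118; 214; 6; 102; 294; 182; 54; 150; 248; 232; 24;
      120; 216; 104; 296; 168; 264; 154; 122; 10; 202; 90; 170; 250; 298; 186;
      268; 236; 124; 12; 204; 284; 60; 108; 300; 78; 46; 238; 126; 14; 94; 174;
      222; 110; 97; 65; 257; 145; 33; 113; 193; 241; 129; 115; 99; 195; 291; 83;
      275; 163; 35; 131; 21; 293; 181; 69; 261; 37; 117; 165; 53; 39; 23; 119;
      215; 7; 199; 87; 263; 55; 153; 137; 233; 25; 121; 9; 201; 73; 169; 59; 27;
      219; 107; 299; 75; 155; 203; 91; 173; 141; 29; 221; 109; 189; 269; 13;
      205; 191; 175; 271; 63; 159; 47; 239; 111; 207; 1; 289; 81; 177; 273; 161;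
      49; 225; 17; 211; 179; 67; 259; 147; 227; 3; 51; 243; 229; 213; 5; 101;
      197; 85; 277; 149; 245; 135; 103; 295; 183; 71; 151; 231; 279; 167; 249;
      217; 105; 297; 185; 265; 41; 89; 281; 267; 251; 43; 139; 235; 123; 11;
      187; 283; 77; 61; 157; 253; 45; 237; 125; 301; 93; 287; 255; 143; 31; 223;
      303; 79; 127; 15];
  [:: 247; 133; 266; 228; 171; 114; 76; 285; 190; 19; 95; 38; 209; 0; 152; 57;
      176; 96; 272; 144; 16; 64; 112; 80; 256; 257; 97; 145; 193; 241; 33; 129;
      65; 113; 162; 2; 50; 98; 146; 242; 34; 274; 18; 3; 259; 243; 227; 211;
      179; 147; 67; 51; 212; 164; 148; 132; 116; 84; 52; 276; 260; 213; 149;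
      229; 5; 85; 245; 101; 197; 277; 230; 198; 86; 278; 166; 246; 22; 70; 262;
      135; 103; 295; 183; 71; 151; 231; 279; 167; 248; 232; 24; 120; 216; 104;
      296; 168; 264; 41; 297; 281; 265; 249; 217; 185; 105; 89; 42; 282; 58;
      138; 218; 74; 234; 26; 106; 155; 107; 91; 75; 59; 27; 299; 219; 203; 156;
      92; 172; 252; 28; 188; 44; 140; 220; 29; 173; 221; 269; 13; 109; 205; 141;
      189; 158; 62; 30; 302; 270; 206; 142; 286; 254; 191; 175; 271; 63; 159;
      47; 239; 111; 207; 288; 240; 224; 208; 192; 160; 128; 48; 32; 81; 1; 177;
      49; 225; 273; 17; 289; 161; 210; 194; 290; 82; 178; 66; 258; 130; 226; 99;
      35; 115; 195; 275; 131; 291; 83; 163; 100; 20; 196; 68; 244; 292; 36; 4;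
      180; 181; 21; 69; 117; 165; 261; 53; 293; 37; 134; 118; 214; 6; 102; 294;
      182; 54; 150; 119; 39; 215; 87; 263; 7; 55; 23; 199; 40; 8; 200; 88; 280;
      56; 136; 184; 72; 25; 233; 201; 169; 137; 73; 9; 153; 121; 154; 122; 10;
      202; 90; 170; 250; 298; 186; 139; 43; 11; 283; 251; 187; 123; 267; 235;
      60; 12; 300; 284; 268; 236; 204; 124; 108; 61; 301; 77; 157; 237; 93; 253;
      45; 125; 78; 46; 238; 126; 14; 94; 174; 222; 110; 143; 287; 31; 79; 127;
      223; 15; 255; 303];
  [:: 266; 228; 209; 114; 152; 247; 133; 57; 95; 285; 19; 190; 76; 38; 0; 171;
      160; 32; 192; 48; 208; 224; 240; 128; 288; 191; 175; 271; 63; 159; 47;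
      239; 111; 207; 158; 62; 30; 302; 270; 206; 142; 286; 254; 253; 157; 125;
      93; 61; 301; 237; 77; 45; 124; 268; 12; 60; 108; 204; 300; 236; 284; 187;
      235; 251; 267; 283; 11; 43; 123; 139; 90; 170; 298; 122; 250; 202; 154;
      186; 10; 25; 233; 201; 169; 137; 73; 9; 153; 121; 24; 248; 120; 296; 168;
      216; 264; 232; 104; 71; 151; 279; 103; 231; 183; 135; 167; 295; 214; 134;
      6; 182; 54; 102; 150; 118; 294; 261; 37; 165; 293; 117; 69; 21; 53; 181;
      196; 100; 68; 36; 4; 244; 180; 20; 292; 179; 51; 211; 67; 227; 243; 259;
      147; 3; 178; 66; 130; 194; 258; 82; 210; 226; 290; 33; 113; 241; 65; 193;
      145; 97; 129; 257; 1; 289; 81; 177; 273; 161; 49; 225; 17; 64; 256; 16;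
      80; 144; 272; 96; 112; 176; 223; 303; 127; 255; 79; 31; 287; 15; 143; 174;
      126; 110; 94; 78; 46; 14; 238; 222; 173; 141; 29; 221; 109; 189; 269; 13;
      205; 140; 28; 92; 156; 220; 44; 172; 188; 252; 27; 203; 59; 219; 75; 91;
      107; 299; 155; 42; 282; 58; 138; 218; 74; 234; 26; 106; 105; 249; 297; 41;
      89; 185; 281; 217; 265; 136; 88; 72; 56; 40; 8; 280; 200; 184; 199; 55; 7;
      263; 215; 119; 23; 87; 39; 22; 278; 262; 246; 230; 198; 166; 86; 70; 5;
      229; 101; 277; 149; 197; 245; 213; 85; 212; 164; 148; 132; 116; 84; 52;
      276; 260; 99; 35; 115; 195; 275; 131; 291; 83; 163; 274; 146; 2; 162; 18;
      34; 50; 242; 98]].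

Definition cert312 : seq (seq N) := [::
  [:: 0; 13; 26; 39; 52; 65; 78; 91; 104; 117; 130; 143; 156; 169; 182; 195;
      208; 221; 234; 247; 260; 273; 286; 299; 288; 240; 216; 96; 72; 24; 1; 289;
      121; 217; 49; 25; 2; 266; 242; 122; 98; 50; 27; 3; 147; 243; 75; 51; 28;
      292; 268; 148; 124; 76; 53; 29; 173; 269; 101; 77; 222; 198; 30; 126; 270;
      246; 223; 175; 151; 31; 7; 271; 80; 32; 8; 200; 176; 128; 249; 201; 177;
      57; 33; 297; 274; 250; 82; 178; 10; 298; 131; 107; 251; 35; 179; 155; 300;
      276; 108; 204; 36; 12; 301; 253; 229; 109; 85; 37; 14; 302; 134; 230; 62;
      38; 183; 159; 303; 87; 231; 207; 40; 16; 160; 256; 88; 64; 209; 185; 17;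
      113; 257; 233; 66; 42; 186; 282; 114; 90; 67; 19; 307; 187; 163; 115; 92;
      68; 212; 308; 140; 116; 93; 45; 21; 213; 189; 141; 118; 94; 238; 22; 166;
      142; 119; 71; 47; 239; 215; 167; 144; 120; 264; 48; 192; 168; 145; 97; 73;
      265; 241; 193; 170; 146; 290; 74; 218; 194; 171; 123; 99; 291; 267; 219;
      196; 172; 4; 100; 244; 220; 197; 149; 125; 5; 293; 245; 54; 6; 294; 174;
      150; 102; 79; 55; 199; 295; 127; 103; 248; 224; 56; 152; 296; 272; 105;
      81; 225; 9; 153; 129; 106; 58; 34; 226; 202; 154; 275; 227; 203; 83; 59;
      11; 132; 84; 60; 252; 228; 180; 157; 133; 277; 61; 205; 181; 158; 110; 86;
      278; 254; 206; 15; 279; 255; 135; 111; 63; 184; 136; 112; 304; 280; 232;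
      41; 305; 281; 161; 137; 89; 210; 162; 138; 18; 306; 258; 235; 211; 43;
      139; 283; 259; 236; 188; 164; 44; 20; 284; 261; 237; 69; 165; 309; 285;
      262; 214; 190; 70; 46; 310; 287; 263; 95; 191; 23; 311];
  [:: 13; 156; 65; 130; 260; 91; 234; 78; 273; 221; 182; 52; 39; 299; 143; 0;
      286; 195; 169; 117; 104; 26; 208; 247; 265; 145; 241; 97; 193; 73; 108;
      12; 276; 36; 300; 204; 5; 197; 293; 149; 245; 125; 250; 178; 298; 274; 82;
      10; 212; 116; 68; 140; 92; 308; 199; 103; 55; 127; 79; 295; 210; 162; 138;
      18; 306; 258; 30; 246; 198; 270; 222; 126; 213; 93; 189; 45; 141; 21; 17;
      233; 185; 257; 209; 113; 302; 230; 38; 14; 134; 62; 172; 100; 220; 196; 4;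
      244; 3; 243; 51; 27; 147; 75; 287; 263; 95; 191; 23; 311; 107; 35; 155;
      131; 251; 179; 240; 96; 24; 288; 216; 72; 94; 22; 142; 118; 238; 166; 159;
      87; 207; 183; 303; 231; 253; 109; 37; 301; 229; 85; 57; 249; 33; 201; 297;
      177; 32; 200; 128; 80; 8; 176; 122; 2; 98; 266; 50; 242; 16; 256; 64; 40;
      160; 88; 187; 67; 163; 19; 115; 307; 227; 83; 11; 275; 203; 59; 121; 25;
      289; 49; 1; 217; 84; 252; 180; 132; 60; 228; 124; 268; 28; 76; 148; 292;
      226; 106; 202; 58; 154; 34; 44; 236; 20; 188; 284; 164; 135; 15; 111; 279;
      63; 255; 81; 9; 129; 105; 225; 153; 264; 168; 120; 192; 144; 48; 277; 181;
      133; 205; 157; 61; 248; 224; 56; 152; 296; 272; 7; 151; 223; 271; 31; 175;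
      74; 170; 218; 146; 194; 290; 54; 6; 294; 174; 150; 102; 267; 99; 171; 219;
      291; 123; 278; 158; 254; 110; 206; 86; 239; 119; 215; 71; 167; 47; 46;
      190; 262; 310; 70; 214; 69; 285; 237; 309; 261; 165; 43; 259; 211; 283;
      235; 139; 161; 41; 137; 305; 89; 281; 173; 77; 29; 101; 53; 269; 304; 184;
      280; 136; 232; 112; 186; 90; 42; 114; 66; 282];
  [:: 234; 208; 195; 26; 130; 13; 117; 247; 65; 52; 221; 169; 0; 286; 156; 260;
      39; 273; 104; 143; 78; 182; 299; 91; 258; 306; 18; 138; 162; 210; 280;
      112; 184; 232; 304; 136; 111; 255; 15; 63; 135; 279; 122; 2; 98; 266; 50;
      242; 298; 10; 178; 82; 250; 274; 241; 73; 145; 193; 265; 97; 33; 177; 249;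
      297; 57; 201; 235; 211; 43; 139; 283; 259; 101; 173; 53; 77; 269; 29; 220;
      244; 100; 4; 172; 196; 113; 209; 257; 185; 233; 17; 61; 157; 205; 133;
      181; 277; 168; 192; 48; 264; 120; 144; 22; 118; 166; 94; 142; 238; 132;
      84; 60; 252; 228; 180; 164; 284; 188; 20; 236; 44; 171; 123; 99; 291; 267;
      219; 45; 213; 141; 93; 21; 189; 80; 32; 8; 200; 176; 128; 179; 251; 131;
      155; 35; 107; 30; 246; 198; 270; 222; 126; 86; 206; 110; 254; 158; 278;
      95; 311; 263; 23; 287; 191; 7; 151; 223; 271; 31; 175; 202; 34; 106; 154;
      226; 58; 6; 174; 102; 54; 294; 150; 64; 88; 256; 160; 16; 40; 69; 285;
      237; 309; 261; 165; 121; 25; 289; 49; 1; 217; 302; 230; 38; 14; 134; 62;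
      124; 268; 28; 76; 148; 292; 212; 116; 68; 140; 92; 308; 81; 9; 129; 105;
      225; 153; 83; 275; 59; 227; 11; 203; 3; 243; 51; 27; 147; 75; 79; 55; 199;
      295; 127; 103; 114; 186; 66; 90; 282; 42; 85; 229; 301; 37; 109; 253; 149;
      5; 245; 197; 125; 293; 214; 70; 310; 262; 190; 46; 24; 72; 96; 216; 240;
      288; 108; 12; 276; 36; 300; 204; 137; 281; 41; 89; 161; 305; 187; 67; 163;
      19; 115; 307; 167; 215; 239; 47; 71; 119; 224; 152; 272; 248; 56; 296;
      170; 146; 290; 74; 218; 194; 231; 303; 183; 207; 87; 159]].

Definition cert320 : seq (seq N) := [::
  [:: 0; 5; 10; 15; 20; 25; 30; 35; 40; 45; 50; 55; 60; 65; 70; 75; 80; 85; 90;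
      95; 100; 105; 110; 115; 120; 125; 130; 135; 140; 145; 150; 155; 160; 165;
      170; 175; 180; 185; 190; 195; 200; 205; 210; 215; 220; 225; 230; 235; 240;
      245; 250; 255; 260; 265; 270; 275; 280; 285; 290; 295; 300; 305; 310; 315;
      256; 64; 66; 194; 196; 4; 6; 134; 72; 8; 202; 138; 12; 268; 142; 78; 16;
      144; 146; 274; 276; 84; 22; 278; 152; 88; 282; 218; 156; 284; 286; 94; 96;
      224; 226; 34; 36; 164; 166; 294; 296; 104; 42; 298; 236; 44; 302; 238;
      176; 304; 306; 114; 116; 244; 182; 118; 312; 248; 122; 58; 316; 124; 126;
      254; 192; 128; 2; 258; 132; 68; 262; 198; 136; 264; 266; 74; 76; 204; 206;
      14; 272; 208; 82; 18; 212; 148; 86; 214; 216; 24; 26; 154; 92; 28; 222;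
      158; 32; 288; 162; 98; 292; 228; 102; 38; 232; 168; 106; 234; 172; 108;
      46; 174; 112; 48; 242; 178; 52; 308; 246; 54; 56; 184; 186; 314; 252; 188;
      62; 318; 257; 193; 67; 3; 197; 133; 71; 199; 201; 9; 11; 139; 141; 269;
      271; 79; 17; 273; 147; 83; 21; 149; 87; 23; 281; 89; 91; 219; 157; 93;
      287; 223; 97; 33; 227; 163; 37; 293; 167; 103; 297; 233; 171; 299; 237;
      173; 111; 239; 177; 113; 307; 243; 117; 53; 311; 119; 121; 249; 251; 59;
      317; 253; 127; 63; 1; 129; 131; 259; 261; 69; 7; 263; 137; 73; 267; 203;
      77; 13; 207; 143; 81; 209; 211; 19; 277; 213; 151; 279; 217; 153; 27; 283;
      221; 29; 31; 159; 161; 289; 291; 99; 101; 229; 231; 39; 41; 169; 107; 43;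
      301; 109; 47; 303; 241; 49; 51; 179; 181; 309; 247; 183; 57; 313; 187;
      123; 61; 189; 191; 319];
  [:: 95; 80; 60; 285; 130; 105; 310; 30; 250; 225; 115; 185; 220; 155; 35; 55;
      15; 305; 255; 40; 235; 260; 295; 140; 45; 300; 70; 190; 150; 270; 165;
      125; 145; 195; 230; 215; 110; 65; 210; 315; 25; 75; 245; 0; 50; 5; 275;
      240; 135; 85; 170; 20; 10; 175; 120; 160; 100; 200; 280; 90; 205; 180;
      265; 290; 192; 128; 193; 257; 258; 2; 3; 67; 196; 4; 69; 261; 6; 134; 71;
      199; 8; 72; 137; 73; 138; 202; 203; 267; 204; 76; 269; 141; 78; 142; 207;
      143; 144; 16; 209; 81; 274; 146; 83; 147; 212; 148; 149; 21; 278; 22; 279;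
      151; 88; 152; 153; 217; 218; 282; 219; 91; 284; 156; 29; 221; 158; 222;
      223; 287; 224; 96; 289; 161; 226; 34; 99; 291; 228; 292; 293; 37; 38; 102;
      103; 167; 104; 296; 169; 41; 234; 106; 299; 171; 44; 236; 173; 237; 174;
      46; 239; 111; 304; 176; 49; 241; 114; 306; 179; 51; 244; 116; 309; 181;
      54; 246; 247; 183; 184; 56; 313; 57; 58; 122; 187; 123; 124; 316; 253;
      317; 254; 126; 63; 127; 256; 64; 1; 129; 66; 194; 259; 131; 132; 68; 133;
      197; 198; 262; 7; 263; 264; 136; 201; 9; 74; 266; 11; 139; 12; 268; 77;
      13; 14; 206; 271; 79; 208; 272; 273; 17; 18; 82; 19; 211; 276; 84; 277;
      213; 86; 214; 87; 23; 216; 24; 281; 89; 26; 154; 27; 283; 92; 28; 157; 93;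
      286; 94; 31; 159; 32; 288; 33; 97; 162; 98; 163; 227; 36; 164; 101; 229;
      166; 294; 231; 39; 232; 168; 297; 233; 298; 42; 107; 43; 108; 172; 301;
      109; 302; 238; 47; 303; 112; 48; 177; 113; 242; 178; 307; 243; 52; 308;
      53; 117; 118; 182; 311; 119; 248; 312; 249; 121; 314; 186; 251; 59; 188;
      252; 61; 189; 318; 62; 319; 191];
  [:: 75; 180; 305; 125; 285; 150; 20; 50; 200; 15; 310; 65; 195; 95; 130; 80;
      165; 240; 220; 210; 35; 100; 25; 40; 280; 270; 295; 275; 105; 190; 55;
      110; 30; 265; 235; 230; 215; 255; 70; 245; 290; 135; 60; 115; 85; 0; 120;
      315; 225; 45; 160; 205; 155; 185; 250; 300; 140; 5; 175; 170; 260; 90; 10;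
      145; 64; 256; 319; 191; 254; 126; 189; 61; 188; 252; 251; 59; 314; 186;
      313; 57; 184; 56; 119; 311; 54; 246; 309; 181; 116; 244; 51; 179; 114;
      306; 113; 177; 48; 112; 303; 47; 238; 302; 109; 301; 44; 236; 171; 299;
      234; 106; 41; 169; 104; 296; 39; 231; 294; 166; 101; 229; 36; 164; 291;
      99; 34; 226; 289; 161; 288; 32; 31; 159; 158; 222; 221; 29; 284; 156; 219;
      91; 154; 26; 89; 281; 216; 24; 23; 87; 86; 214; 277; 213; 148; 212; 147;
      83; 146; 274; 81; 209; 16; 144; 271; 79; 206; 14; 141; 269; 268; 12; 203;
      267; 266; 74; 73; 137; 136; 264; 71; 199; 6; 134; 133; 197; 68; 132; 67;
      3; 66; 194; 1; 129; 193; 257; 128; 192; 63; 127; 62; 318; 253; 317; 124;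
      316; 187; 123; 58; 122; 121; 249; 248; 312; 247; 183; 118; 182; 53; 117;
      308; 52; 243; 307; 178; 242; 241; 49; 176; 304; 111; 239; 46; 174; 173;
      237; 108; 172; 43; 107; 298; 42; 233; 297; 168; 232; 103; 167; 38; 102;
      293; 37; 228; 292; 163; 227; 98; 162; 33; 97; 224; 96; 223; 287; 94; 286;
      93; 157; 28; 92; 283; 27; 218; 282; 153; 217; 88; 152; 279; 151; 278; 22;
      21; 149; 84; 276; 19; 211; 18; 82; 273; 17; 208; 272; 143; 207; 78; 142;
      13; 77; 76; 204; 139; 11; 138; 202; 9; 201; 8; 72; 263; 7; 198; 262; 261;
      69; 4; 196; 259; 131; 258; 2]].

Definition cert336 : seq (seq N) := [::
  [:: 0; 7; 14; 21; 28; 35; 42; 49; 56; 63; 70; 77; 84; 91; 98; 105; 112; 119;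
      126; 133; 140; 147; 154; 161; 168; 175; 182; 189; 196; 203; 210; 217; 224;
      231; 238; 245; 252; 259; 266; 273; 280; 287; 294; 301; 308; 315; 322; 329;
      288; 240; 144; 1; 289; 193; 290; 146; 194; 3; 195; 243; 148; 100; 4; 197;
      149; 53; 150; 6; 54; 295; 247; 151; 248; 104; 152; 57; 9; 249; 10; 202;
      250; 59; 251; 299; 108; 300; 12; 157; 13; 61; 206; 62; 110; 255; 111; 159;
      64; 16; 256; 17; 209; 257; 162; 114; 18; 115; 307; 19; 164; 20; 68; 213;
      69; 117; 262; 118; 166; 311; 167; 215; 24; 216; 264; 169; 121; 25; 122;
      314; 26; 267; 219; 123; 316; 268; 172; 269; 125; 173; 318; 174; 222; 127;
      79; 319; 176; 128; 32; 129; 321; 33; 178; 34; 82; 323; 275; 179; 36; 324;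
      228; 325; 181; 229; 38; 230; 278; 183; 135; 39; 136; 328; 40; 185; 41; 89;
      330; 282; 186; 283; 139; 187; 92; 44; 284; 45; 237; 285; 94; 286; 334;
      143; 335; 47; 192; 48; 96; 241; 97; 145; 50; 2; 242; 99; 51; 291; 52; 244;
      292; 101; 293; 5; 246; 198; 102; 199; 55; 103; 8; 296; 200; 297; 153; 201;
      106; 58; 298; 155; 107; 11; 204; 156; 60; 253; 205; 109; 302; 254; 158;
      15; 303; 207; 304; 160; 208; 113; 65; 305; 66; 258; 306; 211; 163; 67;
      260; 212; 116; 309; 261; 165; 22; 310; 214; 71; 23; 263; 120; 72; 312; 73;
      265; 313; 218; 170; 74; 171; 27; 75; 220; 76; 124; 29; 317; 221; 78; 30;
      270; 31; 223; 271; 80; 272; 320; 225; 177; 81; 274; 226; 130; 227; 83;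
      131; 276; 132; 180; 85; 37; 277; 134; 86; 326; 87; 279; 327; 232; 184; 88;
      281; 233; 137; 234; 90; 138; 43; 331; 235; 332; 188; 236; 141; 93; 333;
      190; 142; 46; 239; 191; 95];
  [:: 98; 287; 168; 189; 119; 175; 28; 259; 203; 56; 84; 14; 280; 112; 182; 161;
      273; 77; 49; 308; 245; 42; 21; 196; 231; 301; 35; 105; 147; 315; 140; 63;
      7; 238; 126; 217; 133; 329; 294; 252; 322; 0; 91; 266; 210; 224; 154; 70;
      254; 158; 302; 233; 137; 281; 120; 72; 312; 123; 267; 219; 17; 209; 257;
      265; 313; 73; 244; 292; 52; 229; 325; 181; 125; 173; 269; 152; 248; 104;
      300; 12; 108; 50; 2; 242; 184; 88; 232; 64; 16; 256; 26; 122; 314; 71; 23;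
      263; 87; 279; 327; 155; 107; 11; 247; 151; 295; 44; 284; 92; 83; 131; 227;
      54; 150; 6; 51; 291; 99; 124; 220; 76; 81; 225; 177; 235; 43; 331; 5; 101;
      293; 207; 15; 303; 261; 165; 309; 141; 93; 333; 20; 68; 164; 9; 249; 57;
      289; 193; 1; 34; 82; 178; 162; 114; 18; 319; 127; 79; 307; 19; 115; 95;
      239; 191; 90; 138; 234; 228; 36; 324; 334; 94; 286; 48; 96; 192; 157; 13;
      61; 326; 134; 86; 318; 174; 222; 272; 320; 80; 22; 310; 214; 250; 10; 202;
      145; 241; 97; 204; 156; 60; 149; 53; 197; 221; 29; 317; 62; 110; 206; 118;
      166; 262; 132; 180; 276; 198; 102; 246; 268; 172; 316; 305; 113; 65; 282;
      186; 330; 4; 148; 100; 75; 171; 27; 332; 188; 236; 30; 270; 78; 144; 288;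
      240; 183; 135; 39; 255; 111; 159; 128; 32; 176; 216; 264; 24; 199; 55;
      103; 283; 139; 187; 41; 89; 185; 163; 67; 211; 213; 69; 117; 208; 304;
      160; 3; 195; 243; 130; 274; 226; 212; 116; 260; 271; 31; 223; 66; 258;
      306; 106; 58; 298; 237; 285; 45; 205; 109; 253; 38; 230; 278; 275; 179;
      323; 169; 121; 25; 167; 215; 311; 299; 59; 251; 201; 297; 153; 46; 190;
      142; 146; 194; 290; 37; 277; 85; 33; 129; 321; 8; 296; 200; 170; 74; 218;
      40; 136; 328; 143; 335; 47];
  [:: 91; 175; 329; 301; 252; 224; 7; 266; 49; 14; 112; 182; 133; 63; 105; 28;
      294; 315; 21; 147; 280; 56; 238; 259; 322; 287; 245; 210; 273; 231; 77;
      203; 126; 70; 196; 161; 42; 189; 0; 308; 217; 98; 168; 84; 140; 35; 119;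
      154; 157; 13; 61; 25; 169; 121; 47; 143; 335; 331; 235; 43; 180; 276; 132;
      32; 176; 128; 289; 193; 1; 230; 278; 38; 295; 247; 151; 2; 242; 50; 256;
      64; 16; 314; 26; 122; 19; 115; 307; 9; 249; 57; 15; 303; 207; 4; 148; 100;
      90; 138; 234; 237; 285; 45; 291; 99; 51; 165; 309; 261; 184; 88; 232; 104;
      152; 248; 130; 274; 226; 181; 229; 325; 286; 334; 94; 41; 89; 185; 179;
      323; 275; 174; 222; 318; 39; 183; 135; 321; 33; 129; 11; 155; 107; 269;
      125; 173; 258; 306; 66; 106; 58; 298; 172; 316; 268; 311; 167; 215; 54;
      150; 6; 219; 123; 267; 144; 288; 240; 188; 236; 332; 79; 319; 127; 110;
      206; 62; 264; 24; 216; 204; 156; 60; 212; 116; 260; 149; 53; 197; 65; 305;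
      113; 214; 22; 310; 330; 282; 186; 208; 304; 160; 111; 159; 255; 73; 265;
      313; 177; 81; 225; 5; 101; 293; 93; 333; 141; 211; 163; 67; 18; 162; 114;
      292; 52; 244; 76; 124; 220; 37; 277; 85; 48; 96; 192; 139; 187; 283; 271;
      31; 223; 164; 20; 68; 200; 8; 296; 117; 213; 69; 158; 302; 254; 74; 218;
      170; 118; 166; 262; 198; 102; 246; 233; 137; 281; 55; 103; 199; 109; 253;
      205; 312; 120; 72; 40; 136; 328; 146; 194; 290; 34; 82; 178; 241; 97; 145;
      201; 297; 153; 327; 87; 279; 317; 221; 29; 10; 202; 250; 257; 17; 209; 83;
      131; 227; 263; 71; 23; 46; 190; 142; 228; 36; 324; 300; 12; 108; 243; 3;
      195; 44; 284; 92; 320; 80; 272; 59; 251; 299; 270; 78; 30; 326; 134; 86;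
      191; 95; 239; 75; 171; 27]].

Definition cert352 : seq (seq N) := [::
  [:: 0; 11; 22; 33; 44; 55; 66; 77; 88; 99; 110; 121; 132; 143; 154; 165; 176;
      187; 198; 209; 220; 231; 242; 253; 264; 275; 286; 297; 308; 319; 330; 341;
      320; 256; 224; 192; 64; 2; 226; 162; 98; 194; 68; 292; 228; 164; 260; 134;
      6; 294; 230; 326; 200; 72; 8; 296; 40; 298; 234; 202; 170; 42; 12; 300;
      268; 236; 108; 46; 270; 206; 142; 238; 112; 336; 272; 208; 304; 210; 146;
      114; 82; 306; 244; 116; 52; 340; 84; 310; 182; 118; 54; 150; 56; 344; 312;
      280; 152; 90; 314; 250; 186; 282; 156; 28; 316; 252; 348; 254; 190; 158;
      126; 350; 288; 160; 96; 32; 128; 34; 322; 290; 258; 130; 100; 36; 4; 324;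
      196; 166; 102; 70; 38; 262; 232; 168; 136; 104; 328; 266; 138; 74; 10;
      106; 332; 204; 140; 76; 172; 78; 14; 334; 302; 174; 144; 80; 48; 16; 240;
      178; 50; 338; 274; 18; 276; 212; 180; 148; 20; 342; 278; 246; 214; 86; 24;
      248; 184; 120; 216; 122; 58; 26; 346; 218; 188; 124; 92; 60; 284; 222; 94;
      30; 318; 62; 321; 193; 129; 65; 161; 67; 3; 323; 291; 163; 101; 325; 261;
      197; 293; 199; 135; 103; 71; 295; 265; 201; 169; 137; 9; 299; 171; 107;
      43; 139; 13; 237; 173; 109; 205; 79; 303; 239; 175; 271; 177; 113; 81; 49;
      273; 243; 179; 147; 115; 339; 309; 245; 213; 181; 53; 343; 215; 151; 87;
      183; 57; 281; 217; 153; 249; 155; 91; 59; 27; 251; 189; 61; 349; 285; 29;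
      255; 127; 63; 351; 95; 1; 289; 257; 225; 97; 35; 259; 195; 131; 227; 133;
      69; 37; 5; 229; 167; 39; 327; 263; 7; 233; 105; 41; 329; 73; 331; 267;
      235; 203; 75; 45; 333; 301; 269; 141; 111; 47; 15; 335; 207; 145; 17; 305;
      241; 337; 211; 83; 19; 307; 51; 277; 149; 85; 21; 117; 23; 311; 279; 247;
      119; 89; 25; 345; 313; 185; 123; 347; 283; 219; 315; 221; 157; 125; 93;
      317; 287; 223; 191; 159; 31];
  [:: 209; 77; 132; 121; 286; 231; 330; 66; 55; 143; 187; 0; 110; 341; 253; 176;
      297; 319; 22; 44; 165; 33; 264; 308; 220; 88; 154; 198; 99; 242; 11; 275;
      96; 288; 32; 128; 160; 193; 161; 321; 129; 65; 162; 2; 98; 194; 226; 3;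
      163; 67; 323; 291; 100; 36; 4; 324; 196; 5; 37; 229; 69; 133; 134; 6; 294;
      230; 326; 135; 295; 199; 103; 71; 232; 168; 136; 104; 328; 169; 265; 137;
      9; 201; 74; 266; 10; 106; 138; 331; 267; 235; 203; 75; 300; 108; 12; 268;
      236; 45; 333; 301; 269; 141; 14; 174; 78; 334; 302; 207; 335; 47; 111; 15;
      144; 80; 48; 16; 240; 337; 241; 17; 145; 305; 18; 274; 50; 178; 338; 211;
      83; 19; 307; 51; 84; 340; 116; 244; 52; 149; 117; 277; 85; 21; 182; 150;
      310; 118; 54; 343; 215; 151; 87; 183; 344; 152; 56; 312; 280; 89; 25; 345;
      313; 185; 26; 122; 346; 218; 58; 91; 251; 155; 59; 27; 28; 348; 156; 316;
      252; 189; 61; 349; 285; 29; 62; 318; 94; 222; 30; 159; 191; 31; 223; 287;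
      320; 256; 224; 192; 64; 257; 1; 225; 97; 289; 34; 322; 290; 258; 130; 35;
      259; 195; 131; 227; 260; 164; 292; 68; 228; 197; 261; 293; 325; 101; 166;
      102; 70; 38; 262; 39; 7; 167; 327; 263; 40; 296; 72; 200; 8; 233; 105; 41;
      329; 73; 202; 298; 170; 42; 234; 171; 139; 299; 107; 43; 172; 76; 204;
      332; 140; 205; 109; 237; 13; 173; 270; 238; 46; 206; 142; 303; 271; 79;
      239; 175; 112; 336; 272; 208; 304; 113; 273; 177; 81; 49; 146; 306; 210;
      114; 82; 179; 339; 243; 147; 115; 276; 212; 180; 148; 20; 245; 53; 309;
      213; 181; 278; 86; 342; 246; 214; 279; 23; 247; 119; 311; 248; 216; 24;
      184; 120; 217; 57; 153; 249; 281; 314; 282; 90; 250; 186; 315; 219; 347;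
      123; 283; 124; 284; 188; 92; 60; 157; 317; 221; 125; 93; 190; 350; 254;
      158; 126; 255; 127; 63; 351; 95];
  [:: 165; 231; 319; 154; 275; 330; 44; 110; 286; 33; 132; 253; 187; 209; 264;
      341; 143; 176; 0; 99; 77; 55; 198; 88; 308; 11; 297; 22; 220; 66; 121;
      242; 64; 192; 256; 320; 224; 287; 223; 191; 159; 31; 158; 254; 126; 350;
      190; 61; 29; 189; 349; 285; 316; 156; 252; 348; 28; 315; 219; 347; 123;
      283; 186; 250; 282; 314; 90; 217; 57; 153; 249; 281; 120; 184; 216; 248;
      24; 247; 279; 119; 311; 23; 182; 150; 310; 118; 54; 245; 53; 309; 213;
      181; 84; 340; 116; 244; 52; 307; 19; 51; 83; 211; 306; 82; 146; 210; 114;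
      113; 273; 177; 81; 49; 80; 240; 144; 48; 16; 335; 15; 207; 47; 111; 142;
      206; 238; 270; 46; 109; 173; 205; 237; 13; 76; 140; 172; 204; 332; 139;
      43; 171; 299; 107; 10; 74; 106; 138; 266; 169; 265; 137; 9; 201; 200; 72;
      8; 296; 40; 295; 71; 135; 199; 103; 6; 326; 134; 294; 230; 293; 197; 325;
      101; 261; 100; 36; 4; 324; 196; 323; 67; 291; 163; 3; 258; 290; 130; 322;
      34; 161; 65; 193; 321; 129; 289; 97; 1; 257; 225; 160; 128; 288; 96; 32;
      95; 351; 127; 255; 63; 62; 318; 94; 222; 30; 125; 221; 93; 317; 157; 124;
      284; 188; 92; 60; 251; 27; 91; 155; 59; 58; 218; 122; 26; 346; 345; 89;
      313; 185; 25; 344; 152; 56; 312; 280; 183; 87; 215; 343; 151; 246; 342;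
      214; 86; 278; 149; 117; 277; 85; 21; 148; 180; 20; 212; 276; 179; 339;
      243; 147; 115; 18; 274; 50; 178; 338; 337; 241; 17; 145; 305; 272; 112;
      208; 304; 336; 271; 175; 303; 79; 239; 174; 302; 14; 78; 334; 301; 45;
      269; 141; 333; 108; 236; 300; 12; 268; 235; 331; 203; 75; 267; 42; 170;
      234; 298; 202; 329; 41; 73; 105; 233; 168; 328; 232; 136; 104; 327; 167;
      263; 7; 39; 70; 166; 38; 262; 102; 37; 133; 5; 229; 69; 164; 228; 260;
      292; 68; 227; 131; 259; 35; 195; 162; 2; 98; 194; 226]].

Local Close Scope N_scope.

Definition certificates : seq (nat * seq (seq N)) :=
  [:: (60, cert60); (80, cert80); (84, cert84); (100, cert100); (112, cert112);
      (120, cert120); (132, cert132); (156, cert156); (160, cert160);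
      (168, cert168); (176, cert176); (180, cert180); (204, cert204);
      (208, cert208); (224, cert224); (228, cert228); (240, cert240);
      (252, cert252); (264, cert264); (272, cert272); (276, cert276);
      (300, cert300); (304, cert304); (312, cert312); (320, cert320);
      (336, cert336); (352, cert352)].

Lemma certificates_valid :
  all (fun c => dca_cert c.1 3 (map (map nat_of_bin) c.2)) certificates.
Proof. by vm_compute. Qed.

Lemma certificate_moduli :
  map fst certificates = [:: 60; 80; 84; 100; 112; 120; 132; 156; 160; 168;
    176; 180; 204; 208; 224; 228; 240; 252; 264; 272; 276; 300; 304; 312; 320;
    336; 352].
Proof. by []. Qed.

Theorem mainTheorem11 :
  forall n : nat,
    n \in [:: 60; 80; 84; 100; 112; 120; 132; 156; 160; 168; 176; 180; 204;
              208; 224; 228; 240; 252; 264; 272; 276; 300; 304; 312; 320;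
              336; 352] ->
    exists Q : 'M['Z_n]_(n.+1, 3.+1),
      is_DCA Q /\ normalized Q /\ P1 Q /\ P2 Q.
Proof.
case=> [|[|m]] //; rewrite -certificate_moduli => /mapP[[n cols] cert_in /= n_eq].
by subst n; exact: dca_cert_sound (allP certificates_valid _ cert_in).
Qed.
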